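(* Let $\Lambda_1,\Lambda_2\in\mathcal{M}_2$. If $\widehat{\Lambda_1}$ or $\widehat{\Lambda_2}$ is differentiable, then $\widehat{\Lambda_1*\Lambda_2}$ is differentiable.
   Context: $\mathcal{M}_2$ is the set of bivariate tail dependence functions $\Lambda(\mathbf{w})=\lim_{s\searrow0}C(s\mathbf{w})/s$, $\mathbf{w}\in\mathbb{R}_+^2$ ($\mathbb{R}_+=[0,\infty)$), of $2$-copulas $C$; they are concave, $1$-Lipschitz and positively homogeneous of order $1$. For $\Lambda\in\mathcal{M}_2$ write $\widehat{\Lambda}(t):=\Lambda(t,1-t)$ for $t\in[0,1]$. The Markov product of $\Lambda_1,\Lambda_2\in\mathcal{M}_2$ is $(\Lambda_1*\Lambda_2)(w_1,w_2):=\int_0^\infty\partial_2\Lambda_1(w_1,t)\,\partial_1\Lambda_2(t,w_2)\,dt$, again an element of $\mathcal{M}_2$. *)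

From Stdlib Require Import Reals.
From Coquelicot Require Import Coquelicot.
Open Scope R_scope.

(* A bivariate copula C : [0,1]^2 -> [0,1] (values outside [0,1]^2 irrelevant). *)
Definition is_copula2 (C : R -> R -> R) : Prop :=
  (forall u v, 0 <= u <= 1 -> 0 <= v <= 1 -> 0 <= C u v <= 1) /\
  (forall u, 0 <= u <= 1 -> C u 0 = 0 /\ C 0 u = 0) /\
  (forall u, 0 <= u <= 1 -> C u 1 = u /\ C 1 u = u) /\
  (forall u1 u2 v1 v2, 0 <= u1 -> u1 <= u2 -> u2 <= 1 ->
      0 <= v1 -> v1 <= v2 -> v2 <= 1 ->
      C u2 v2 - C u2 v1 - C u1 v2 + C u1 v1 >= 0).

Definition is_tdf_of (C : R -> R -> R) (L : R -> R -> R) : Prop :=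
  forall w1 w2, 0 <= w1 -> 0 <= w2 ->
    filterlim (fun s => C (s * w1) (s * w2) / s) (at_right 0) (locally (L w1 w2)).

(* M_2 : tail dependence functions of 2-copulas (only values on R_+^2 matter). *)
Definition in_M2 (L : R -> R -> R) : Prop :=
  exists C, is_copula2 C /\ is_tdf_of C L.

Definition markov_prod (L1 L2 : R -> R -> R) : R -> R -> R :=
  fun w1 w2 =>
    RInt_gen (fun t => Derive (fun s => L1 w1 s) t * Derive (fun s => L2 s w2) t)
             (at_point 0) (Rbar_locally p_infty).

Definition hat (L : R -> R -> R) : R -> R := fun t => L t (1 - t).

Definition hat_differentiable (L : R -> R -> R) : Prop :=
  forall t, 0 < t < 1 -> ex_derive (hat L) t.

From Stdlib Require Import Reals Lra Lia Classical FunctionalExtensionality.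
From Coquelicot Require Import Coquelicot.
Open Scope R_scope.

(* Write [phi y = L1 1 y]. The copula axioms make [phi] nondecreasing,
   1-Lipschitz, bounded by 1 and concave: 2-increasingness of [L1] on
   [[l, 1] x [l y, l z]] plus homogeneity says that slopes of [phi] can only grow
   under the contraction [y |-> l y], which forces the slopes along a geometric
   grid to decrease. By homogeneity [d2 L1 (t, x) = phi' (x / t)], so the
   substitution [x = (1 - t) s] gives
     (L1 * L2)^(t) = (1 - t) H ((1 - t) / t),   H r = int_0^oo phi' (r s) g s ds,
   with [g = d1 L2 (., 1)] nonincreasing and [[0, 1]]-valued. If [L1^] is
   differentiable then [phi'] is continuous on (0, oo), and the difference
   quotients of [H] are Cauchy: by Abel's inequality for the weight [g] they are
   controlled by the difference quotients of [int_0^x phi' (r s) ds = phi (r x) / r],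
   which converge uniformly in [x] by the mean value theorem. The case of [L2^]
   differentiable follows by transposing [L1] and [L2]. *)

(** * Real-analysis preliminaries *)

Lemma le_of_le_add_mul (x y K : R) : 0 <= K -> (forall e, 0 < e <= 1 -> x <= y + K * e) -> x <= y.
Proof.
  intros HK H; apply le_epsilon; intros eps Heps.
  set (e := Rmin 1 (eps / (K + 1))).
  assert (He : 0 < e <= 1)
    by (split; [apply Rmin_pos; [lra | apply Rdiv_lt_0_compat; lra] | apply Rmin_l]).
  apply Rle_trans with (y + K * e); [apply H, He |].
  assert (K * e <= K * (eps / (K + 1))) by (apply Rmult_le_compat_l; [lra | apply Rmin_r]).
  assert (K * (eps / (K + 1)) <= eps).
  { apply Rmult_le_reg_r with (K + 1); [lra |].
    replace (K * (eps / (K + 1)) * (K + 1)) with (K * eps) by (field; lra); nra. }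
  lra.
Qed.

Lemma eq_of_close (a b x0 : R) : 0 < x0 -> (forall e, 0 < e < x0 -> Rabs (a - b) <= e) -> a = b.
Proof.
  intros Hx0 H; apply Rminus_diag_uniq; apply NNPP; intros Hne.
  assert (HD : 0 < Rabs (a - b)) by (apply Rabs_pos_lt; exact Hne).
  specialize (H (Rmin (x0 / 2) (Rabs (a - b) / 2))
               ltac:(split; [apply Rmin_pos | pose proof (Rmin_l (x0 / 2) (Rabs (a - b) / 2))]; lra)).
  pose proof (Rmin_r (x0 / 2) (Rabs (a - b) / 2)); lra.
Qed.

Lemma Rabs_mul_diff_le (a b u v : R) : 0 <= u -> 0 <= b ->
  Rabs (a * u - b * v) <= Rabs (a - b) * u + b * Rabs (u - v).
Proof.
  intros Hu Hb.
  replace (a * u - b * v) with ((a - b) * u + b * (u - v)) by ring.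
  apply Rle_trans with (1 := Rabs_triang _ _).
  rewrite !Rabs_mult, (Rabs_right u), (Rabs_right b) by lra; lra.
Qed.

Lemma bounded_sup (f : R -> R) (D : R -> Prop) (x0 K : R) :
  D x0 -> (forall x, D x -> f x <= K) ->
  exists S, (forall x, D x -> f x <= S) /\
            (forall eps, 0 < eps -> exists x, D x /\ S - eps < f x).
Proof.
  intros Hx0 HK.
  destruct (completeness (fun v => exists x, D x /\ v = f x)) as [S [Hub Hlub]].
  - exists K; intros v [x [Hx ->]]; apply HK, Hx.
  - exists (f x0), x0; split; [exact Hx0 | reflexivity].
  - exists S; split; [intros x Hx; apply Hub; exists x; split; [exact Hx | reflexivity] |].
    intros eps Heps.
    apply NNPP; intros Hn.
    enough (S <= S - eps) by lra.
    apply Hlub; intros v [x [Hx ->]].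
    apply Rnot_lt_le; intros Hlt; apply Hn; exists x; split; [exact Hx | exact Hlt].
Qed.

Lemma nat_exit (P : nat -> Prop) n : P 0%nat -> ~ P n -> exists j, P j /\ ~ P (S j).
Proof.
  intros H0; induction n as [| n IH]; intros Hn; [contradiction |].
  destruct (classic (P n)); [exists n; split; assumption | apply IH; assumption].
Qed.

Lemma geometric_grid_exit x eta w : 0 < x -> 0 < eta -> x <= w ->
  exists j, x * (1 + eta) ^ j <= w < x * (1 + eta) ^ S j.
Proof.
  intros Hx He Hw.
  destruct (INR_unbounded (w / (x * eta))) as [n Hn].
  destruct (nat_exit (fun i => x * (1 + eta) ^ i <= w) n) as [j [Hj Hj']].
  - simpl; lra.
  - intros Hle; enough (w < x * (1 + eta) ^ n) by lra.
    apply Rlt_le_trans with (x * (1 + INR n * eta)).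
    + apply Rmult_lt_reg_r with (/ (x * eta)); [apply Rinv_0_lt_compat; nra |].
      replace (x * (1 + INR n * eta) * / (x * eta)) with (/ eta + INR n) by (field; lra).
      assert (0 < / eta) by (apply Rinv_0_lt_compat; lra); unfold Rdiv in Hn; lra.
    + apply Rmult_le_compat_l; [lra | apply Rle_pow_lin; lra].
  - exists j; split; [exact Hj | apply Rnot_le_lt, Hj'].
Qed.

Lemma sum_slopes_ge (F p d : nat -> R) (sigma : R) (i n : nat) :
  (forall l, F (S l) - F l = d l * (p (S l) - p l)) ->
  (forall l, p l <= p (S l)) ->
  (forall l, (i <= l < i + n)%nat -> sigma <= d l) ->
  sigma * (p (i + n)%nat - p i) <= F (i + n)%nat - F i.
Proof.
  intros HF Hp Hd; induction n as [| n IH]; [rewrite Nat.add_0_r; lra |].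
  replace (i + S n)%nat with (S (i + n)) by lia.
  specialize (IH ltac:(intros l Hl; apply Hd; lia)).
  specialize (HF (i + n)%nat); specialize (Hp (i + n)%nat); specialize (Hd (i + n)%nat ltac:(lia)).
  nra.
Qed.

Lemma piecewise_linear_concave (F p d : nat -> R) (j k : nat) :
  (forall l, F (S l) - F l = d l * (p (S l) - p l)) ->
  (forall l, p l <= p (S l)) ->
  (forall l, d (S l) <= d l) ->
  (j <= k)%nat ->
  (F k - F j) * (p j - p 0%nat) <= (F j - F 0%nat) * (p k - p j).
Proof.
  intros HF Hp Hd Hjk.
  assert (Hd_mon : forall l m, (l <= m)%nat -> d m <= d l).
  { intros l m Hlm; induction Hlm; [lra | specialize (Hd m); lra]. }
  assert (Hp_mon : forall l m, (l <= m)%nat -> p l <= p m).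
  { intros l m Hlm; induction Hlm; [lra | specialize (Hp m); lra]. }
  assert (Hleft := sum_slopes_ge F p d (d j) 0 j HF Hp ltac:(intros l Hl; apply Hd_mon; lia)).
  assert (Hright := sum_slopes_ge (fun l => - F l) p (fun l => - d l) (- d j) j (k - j)
                      ltac:(intros l; specialize (HF l); lra) Hp
                      ltac:(intros l Hl; assert (d l <= d j) by (apply Hd_mon; lia); lra)).
  replace (j + (k - j))%nat with k in Hright by lia; simpl in Hleft.
  assert (p 0%nat <= p j) by (apply Hp_mon; lia).
  assert (p j <= p k) by (apply Hp_mon; lia).
  nra.
Qed.

Definition slope (f : R -> R) (x y : R) : R := (f y - f x) / (y - x).

Lemma filterlim_plus_scal {T} (F : (T -> Prop) -> Prop) {FF : Filter F} (f g : T -> R) a b k :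
  filterlim f F (locally a) -> filterlim g F (locally b) ->
  filterlim (fun s => f s + k * g s) F (locally (a + k * b)).
Proof.
  intros Hf Hg.
  eapply filterlim_comp_2; [exact Hf | | apply (filterlim_plus (V := R_NormedModule))].
  eapply filterlim_comp; [exact Hg | apply (filterlim_scal_r (V := R_NormedModule))].
Qed.

Lemma filterlim_slope_diff {T} (F : (T -> Prop) -> Prop) {FF : Filter F} (I : T -> R -> R)
  (H : R -> R) r0 r r' : r <> r0 -> r' <> r0 ->
  filterlim (fun t => I t r) F (locally (H r)) -> filterlim (fun t => I t r0) F (locally (H r0)) ->
  filterlim (fun t => I t r') F (locally (H r')) ->
  filterlim (fun t => slope (I t) r0 r - slope (I t) r0 r') F (locally (slope H r0 r - slope H r0 r')).
Proof.
  intros Hne Hne' Hr H0 Hr'.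
  assert (Hc := filterlim_plus_scal F _ _ _ _ (/ (r' - r0) - / (r - r0))
                  (filterlim_plus_scal F _ _ _ _ (- / (r' - r0))
                     (filterlim_plus_scal F _ _ _ _ (/ (r - r0)) (filterlim_const (F := F) 0) Hr) Hr') H0).
  replace (slope H r0 r - slope H r0 r') with
    (0 + / (r - r0) * H r + - / (r' - r0) * H r' + (/ (r' - r0) - / (r - r0)) * H r0)
    by (unfold slope; field; lra).
  apply (filterlim_ext (fun t => 0 + / (r - r0) * I t r + - / (r' - r0) * I t r'
                                 + (/ (r' - r0) - / (r - r0)) * I t r0)); [| exact Hc].
  intros t; unfold slope; field; lra.
Qed.

Lemma Rabs_le_of_filterlim {T} (F : (T -> Prop) -> Prop) {FF : ProperFilter' F} (X : T -> R) D M :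
  filterlim X F (locally D) -> F (fun t => Rabs (X t) <= M) -> Rabs D <= M.
Proof.
  intros HX HM; apply Rabs_le_between; split.
  - apply (filterlim_le (fun _ => - M) X (- M) D); [| apply filterlim_const | exact HX].
    exact (filter_imp _ _ (fun t Ht => proj1 (proj1 (Rabs_le_between _ _) Ht)) HM).
  - apply (filterlim_le X (fun _ => M) D M); [| exact HX | apply filterlim_const].
    exact (filter_imp _ _ (fun t Ht => proj2 (proj1 (Rabs_le_between _ _) Ht)) HM).
Qed.

Lemma at_right_0_scaled_le_1 (w : R) : 0 <= w -> at_right 0 (fun s => 0 < s /\ s * w <= 1).
Proof.
  intros Hw; exists (mkposreal (/ (w + 1)) ltac:(apply Rinv_0_lt_compat; lra)).
  intros s Hs Hs0; change (Rabs (s - 0) < / (w + 1)) in Hs.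
  rewrite Rminus_0_r, Rabs_right in Hs by lra; split; [exact Hs0 |].
  apply Rmult_lt_compat_r with (r := w + 1) in Hs; [| lra].
  rewrite Rinv_l in Hs by lra; nra.
Qed.

Lemma filterlim_at_right_scale c : 0 < c -> filterlim (fun s => s * c) (at_right 0) (at_right 0).
Proof.
  intros Hc P [eps HP].
  exists (mkposreal (eps / c) ltac:(apply Rdiv_lt_0_compat; [apply cond_pos | lra])).
  intros s Hs Hs0; change (Rabs (s - 0) < eps / c) in Hs.
  rewrite Rminus_0_r, Rabs_right in Hs by lra.
  apply HP; [| nra].
  change (Rabs (s * c - 0) < eps); rewrite Rminus_0_r, Rabs_right by nra.
  apply Rmult_lt_compat_r with (r := c) in Hs; [| lra].
  replace (eps / c * c) with (pos eps) in Hs by (field; lra); exact Hs.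
Qed.

Lemma limit_ge_of_eventually (v : R -> R) k q w : 0 <= w ->
  filterlim v (at_right 0) (locally k) ->
  (forall s, 0 < s -> s * w <= 1 -> q <= v s) -> q <= k.
Proof.
  intros Hw Hv Hq.
  apply (filterlim_le (F := at_right 0) (fun _ => q) v q k); [| apply filterlim_const | exact Hv].
  exact (filter_imp _ _ (fun s Hs => Hq s (proj1 Hs) (proj2 Hs)) (at_right_0_scaled_le_1 w Hw)).
Qed.

Lemma limit_le_of_eventually (v : R -> R) k q w : 0 <= w ->
  filterlim v (at_right 0) (locally k) ->
  (forall s, 0 < s -> s * w <= 1 -> v s <= q) -> k <= q.
Proof.
  intros Hw Hv Hq.
  apply (filterlim_le (F := at_right 0) v (fun _ => q) k q); [| exact Hv | apply filterlim_const].
  exact (filter_imp _ _ (fun s Hs => Hq s (proj1 Hs) (proj2 Hs)) (at_right_0_scaled_le_1 w Hw)).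
Qed.

Lemma filterlim_div_p_infty u : 0 < u ->
  filterlim (fun B => B / u) (Rbar_locally p_infty) (Rbar_locally p_infty).
Proof.
  intros Hu P [M HM]; exists (M * u); intros B HB; apply HM.
  apply Rmult_lt_reg_r with u; [exact Hu |].
  unfold Rdiv; rewrite Rmult_assoc, Rinv_l, Rmult_1_r by lra; exact HB.
Qed.

Lemma nondecreasing_bounded_cvg_p_infty (I : R -> R) K :
  (forall x y, 0 < x -> x <= y -> I x <= I y) -> (forall x, 0 < x -> I x <= K) ->
  exists l, filterlim I (Rbar_locally p_infty) (locally l).
Proof.
  intros Hmon HK.
  destruct (bounded_sup I (fun x => 0 < x) 1 K Rlt_0_1 HK) as [l [Hle Happ]].
  exists l; intros P [eps HP].
  destruct (Happ eps (cond_pos eps)) as [x0 [Hx0 Hl0]].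
  exists x0; intros x Hx; apply HP.
  assert (I x0 <= I x) by (apply Hmon; lra).
  assert (I x <= l) by (apply Hle; lra).
  change (Rabs (I x - l) < eps); apply Rabs_def1; lra.
Qed.

Lemma filterlim_inv_INR_S_at_right :
  filterlim (fun n : nat => 0 + / (INR n + 1)) eventually (at_right 0).
Proof.
  intros P [eps HP].
  destruct (INR_unbounded (/ eps)) as [n0 Hn0].
  exists n0; intros n Hn.
  assert (Hpos : 0 < / (INR n + 1)) by (apply Rinv_0_lt_compat; pose proof (pos_INR n); lra).
  rewrite Rplus_0_l; apply HP; [| exact Hpos].
  change (Rabs (/ (INR n + 1) - 0) < eps).
  rewrite Rminus_0_r, Rabs_right by lra.
  apply le_INR in Hn.
  rewrite <- (Rinv_inv eps); apply Rinv_lt_contravar; [| lra].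
  assert (0 < / eps) by (apply Rinv_0_lt_compat, cond_pos); nra.
Qed.

(* [Derive f x] is the limit of the difference quotients along the positive
   sequence [1/(n+1)], hence it is the right derivative whenever that exists. *)
Lemma Derive_right (f : R -> R) x l :
  filterlim (fun h => (f (x + h) - f x) / h) (at_right 0) (locally l) -> Derive f x = l.
Proof.
  intros Hl; unfold Derive, Lim.
  rewrite (is_lim_seq_unique _ l); [reflexivity |].
  exact (filterlim_comp _ _ _ _ _ _ _ _ filterlim_inv_INR_S_at_right Hl).
Qed.

Lemma left_slope_close (f : R -> R) y eps d0 : ex_derive f y -> 0 < eps -> 0 < d0 ->
  exists k, 0 < k <= d0 /\ slope f (y - k) y < Derive f y + eps.
Proof.
  intros Hf Heps Hd0.
  destruct (proj1 (is_derive_Reals _ _ _) (Derive_correct _ _ Hf) eps Heps) as [d Hd].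
  set (k := Rmin (d / 2) d0).
  assert (Hk : 0 < k < d /\ k <= d0).
  { assert (0 < k) by (apply Rmin_pos; pose proof (cond_pos d); lra).
    pose proof (Rmin_l (d / 2) d0); pose proof (Rmin_r (d / 2) d0); pose proof (cond_pos d).
    unfold k in *; lra. }
  exists k; split; [lra |].
  assert (Habs := Hd (- k) ltac:(lra) ltac:(rewrite Rabs_Ropp, Rabs_right; lra)).
  replace ((f (y + - k) - f y) / - k) with (slope f (y - k) y) in Habs
    by (unfold slope; replace (y + - k) with (y - k) by ring; field; lra).
  apply Rabs_def2 in Habs; lra.
Qed.

Lemma continuity_pt_slope (f : R -> R) a b : ex_derive f a -> a <> b ->
  continuity_pt (fun u => slope f u b) a /\ continuity_pt (fun u => slope f b u) a.
Proof.
  intros Hf Hab; split; apply continuity_pt_filterlim.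
  - apply (ex_derive_continuous (K := R_AbsRing) (V := R_NormedModule) (fun u => slope f u b)).
    unfold slope; auto_derive; split; [exact Hf | lra].
  - apply (ex_derive_continuous (K := R_AbsRing) (V := R_NormedModule) (fun u => slope f b u)).
    unfold slope; auto_derive; split; [exact Hf | lra].
Qed.

Lemma ex_derive_of_slope_cauchy (F : R -> R) x0 :
  (forall eps, 0 < eps -> exists del, 0 < del /\ forall r r',
     0 < Rabs (r - x0) < del -> 0 < Rabs (r' - x0) < del ->
     Rabs (slope F x0 r - slope F x0 r') <= eps) ->
  ex_derive F x0.
Proof.
  intros HC.
  destruct (proj1 (filterlim_locally_cauchy (U := R_CompleteSpace) (F := Rbar_locally' (Finite x0))
                     (slope F x0))) as [l Hl].
  - intros eps; destruct (HC (eps / 2) ltac:(pose proof (cond_pos eps); lra)) as [d [Hd Hdd]].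
    exists (fun r => 0 < Rabs (r - x0) < d); split.
    + exists (mkposreal d Hd); intros y Hy Hne; split; [apply Rabs_pos_lt; lra | exact Hy].
    + intros u v Hu Hv; change (Rabs (slope F x0 v - slope F x0 u) < eps).
      specialize (Hdd v u Hv Hu); pose proof (cond_pos eps); lra.
  - exists l; apply is_derive_Reals; intros eps Heps.
    destruct (Hl (fun v => Rabs (v - l) < eps)) as [d Hd].
    { exists (mkposreal eps Heps); intros v Hv; exact Hv. }
    exists d; intros h Hh0 Hh.
    assert (H := Hd (x0 + h)); unfold slope in H; replace (x0 + h - x0) with h in H by ring.
    apply H; [change (Rabs (x0 + h - x0) < d); replace (x0 + h - x0) with h by ring; exact Hh | lra].
Qed.

Definition derivable_pos (f : R -> R) : Prop := forall y, 0 < y -> ex_derive f y.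

(** * Integrals of monotone functions and Abel's inequality *)

Definition nonincreasing_on (h : R -> R) (a b : R) : Prop :=
  forall x y, a <= x -> x <= y -> y <= b -> h y <= h x.

Lemma nonincreasing_threshold (h : R -> R) (a b th : R) :
  a <= b -> nonincreasing_on h a b ->
  exists c, a <= c <= b /\ (forall x, a < x < c -> th <= h x) /\
            (forall x, c < x < b -> h x < th).
Proof.
  intros Hab Hh.
  set (E := fun x => a <= x <= b /\ (x = a \/ th <= h x)).
  destruct (completeness E) as [c [Hub Hlub]].
  - exists b; intros x [Hx _]; lra.
  - exists a; split; [lra | now left].
  - assert (Hac : a <= c) by (apply Hub; split; [lra | now left]).
    assert (Hcb : c <= b) by (apply Hlub; intros x [Hx _]; lra).
    exists c; split; [lra | split].
    + intros x Hx.
      destruct (classic (exists y, E y /\ x < y)) as [[y [[Hy [Hya | Hyh]] Hxy]] | Hn].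
      * lra.
      * apply Rle_trans with (h y); [exact Hyh | apply Hh; lra].
      * enough (c <= x) by lra.
        apply Hlub; intros y Hy.
        destruct (Rle_dec y x) as [? | Hyx]; [assumption |].
        exfalso; apply Hn; exists y; split; [assumption | lra].
    + intros x Hx.
      destruct (Rlt_dec (h x) th) as [? | Hn]; [assumption |].
      enough (x <= c) by lra.
      apply Hub; split; [lra | right; lra].
Qed.

Lemma is_RInt_mul_threshold (f h : R -> R) (a b th : R) :
  a <= b -> nonincreasing_on h a b -> ex_RInt f a b ->
  exists c, a <= c <= b /\
    is_RInt (fun x => f x * (if Rle_dec th (h x) then 1 else 0)) a b (RInt f a c).
Proof.
  intros Hab Hh Hf.
  destruct (nonincreasing_threshold h a b th Hab Hh) as [c [Hc [Habove Hbelow]]].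
  exists c; split; [exact Hc |].
  replace (RInt f a c) with (RInt f a c + (b - c) * 0) by ring.
  refine (is_RInt_Chasles _ a c b (RInt f a c) ((b - c) * 0) _ _).
  - apply (is_RInt_ext f).
    + intros x Hx; rewrite Rmin_left, Rmax_right in Hx by lra.
      destruct (Rle_dec th (h x)) as [_ | Hn]; [now rewrite Rmult_1_r |].
      exfalso; apply Hn, Habove; lra.
    + apply (RInt_correct (V := R_CompleteNormedModule)), (ex_RInt_Chasles_1 f a c b); [lra | exact Hf].
  - apply (is_RInt_ext (fun _ => 0)); [| apply (is_RInt_const c b 0)].
    intros x Hx; rewrite Rmin_left, Rmax_right in Hx by lra.
    destruct (Rle_dec th (h x)) as [Hl | _]; [| now rewrite Rmult_0_r].
    specialize (Hbelow x Hx); lra.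
Qed.

Lemma is_RInt_0 (a b : R) : is_RInt (fun _ => 0) a b 0.
Proof.
  pose proof (is_RInt_const a b 0) as H.
  change (scal (b - a) 0) with ((b - a) * 0) in H; rewrite Rmult_0_r in H; exact H.
Qed.

(* For [v >= 0], [staircase e N v = e * min N (floor (v / e))]. *)
Fixpoint staircase (e : R) (N : nat) (v : R) : R :=
  match N with
  | O => 0
  | S n => staircase e n v + (if Rle_dec (INR (S n) * e) v then e else 0)
  end.

Lemma staircase_spec e N v : 0 < e -> 0 <= v ->
  (INR N * e <= v -> staircase e N v = INR N * e) /\
  (v < INR N * e -> v - e < staircase e N v <= v).
Proof.
  intros He Hv; induction N as [| n [IHle IHlt]]; [simpl; split; intros; lra |].
  cbn [staircase].
  destruct (Rle_dec (INR (S n) * e) v) as [Hl | Hl]; rewrite S_INR in *.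
  - split; intros; [rewrite IHle by nra; ring | lra].
  - split; intros; [lra |].
    destruct (Rle_dec (INR n * e) v) as [Hn | Hn].
    + rewrite IHle by exact Hn; nra.
    + specialize (IHlt ltac:(lra)); lra.
Qed.

Lemma staircase_approx e N v : 0 < e -> 0 <= v <= INR N * e ->
  v - e < staircase e N v <= v.
Proof.
  intros He Hv; destruct (staircase_spec e N v He (proj1 Hv)) as [Hle Hlt].
  destruct (Rle_dec (INR N * e) v); [rewrite Hle by assumption; lra | apply Hlt; lra].
Qed.

Lemma staircase_le e N v : 0 < e -> 0 <= v -> staircase e N v <= v.
Proof.
  intros He Hv; destruct (staircase_spec e N v He Hv) as [Hle Hlt].
  destruct (Rle_dec (INR N * e) v); [rewrite Hle by assumption; lra | apply Hlt; lra].
Qed.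

Lemma is_RInt_mul_staircase (f h : R -> R) a b e N M :
  a <= b -> nonincreasing_on h a b -> ex_RInt f a b -> 0 < e ->
  (forall x, a <= x <= b -> Rabs (RInt f a x) <= M) ->
  exists v : R, is_RInt (fun x => f x * staircase e N (h x)) a b v /\
            Rabs v <= M * staircase e N (h a).
Proof.
  intros Hab Hh Hf He HM.
  assert (HM0 : 0 <= M) by (apply Rle_trans with (Rabs (RInt f a a)); [apply Rabs_pos | apply HM; lra]).
  induction N as [| n [v [Hv Hvb]]].
  - exists 0; split; [| rewrite Rabs_R0; simpl; lra].
    apply (is_RInt_ext (fun _ => 0)); [intros; simpl; ring | apply is_RInt_0].
  - set (th := INR (S n) * e).
    assert (Hunfold : forall x, f x * staircase e (S n) (h x) =
              f x * staircase e n (h x) + e * (f x * (if Rle_dec th (h x) then 1 else 0))).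
    { intros x; cbn [staircase]; fold th; destruct Rle_dec; ring. }
    destruct (Rle_dec th (h a)) as [Hth | Hth].
    + destruct (is_RInt_mul_threshold f h a b th Hab Hh Hf) as [c [Hc Hi]].
      exists (v + e * RInt f a c); split.
      * apply (is_RInt_ext _ _ a b _ (fun x _ => eq_sym (Hunfold x))).
        exact (is_RInt_plus _ _ a b _ _ Hv (is_RInt_scal _ a b e _ Hi)).
      * cbn [staircase]; fold th; destruct (Rle_dec th (h a)) as [_ | ]; [| contradiction].
        specialize (HM c Hc).
        apply Rle_trans with (Rabs v + Rabs (e * RInt f a c)); [apply Rabs_triang |].
        rewrite Rabs_mult, (Rabs_right e) by lra; nra.
    + exists v; split.
      * apply (is_RInt_ext (fun x => f x * staircase e n (h x))); [| exact Hv].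
        intros x Hx; rewrite Rmin_left, Rmax_right in Hx by lra.
        rewrite Hunfold; destruct (Rle_dec th (h x)) as [Hx' | ]; [| simpl; ring].
        exfalso; apply Hth, Rle_trans with (h x); [exact Hx' | apply Hh; lra].
      * cbn [staircase]; fold th; destruct (Rle_dec th (h a)); [contradiction | lra].
Qed.

Lemma staircase_uniform_cvg (k : R -> R) K : (forall x, 0 <= k x <= K) ->
  exists N, filterlim (fun n x => staircase (/ (INR n + 1)) (N * S n) (k x)) eventually
                      (locally (k : fct_UniformSpace R R_UniformSpace)).
Proof.
  intros Hk; destruct (INR_unbounded K) as [N HN]; exists N.
  intros P [eps HP].
  destruct (INR_unbounded (/ eps)) as [n0 Hn0].
  exists n0; intros n Hn; apply HP; intros x.
  set (e := / (INR n + 1)).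
  assert (He : 0 < e) by (apply Rinv_0_lt_compat; pose proof (pos_INR n); lra).
  assert (HNn : INR (N * S n) * e = INR N).
  { unfold e; rewrite mult_INR, S_INR; field; pose proof (pos_INR n); lra. }
  assert (Happrox := staircase_approx e (N * S n) (k x) He ltac:(rewrite HNn; specialize (Hk x); lra)).
  assert (Hen : e < eps).
  { apply le_INR in Hn; unfold e.
    rewrite <- (Rinv_inv eps); apply Rinv_lt_contravar; [| lra].
    assert (0 < / eps) by (apply Rinv_0_lt_compat, cond_pos); nra. }
  change (Rabs (staircase e (N * S n) (k x) - k x) < eps); apply Rabs_def1; lra.
Qed.

(* Uniform limit of the staircase functions of [h], which are integrable by
   [is_RInt_mul_staircase] with [f = 1]. *)
Lemma ex_RInt_nonincreasing (h : R -> R) a b :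
  a <= b -> nonincreasing_on h a b -> ex_RInt h a b.
Proof.
  intros Hab Hh.
  set (clamp := fun x => Rmax a (Rmin b x)).
  assert (Hclamp : forall x, a <= clamp x <= b).
  { intros x; unfold clamp, Rmax, Rmin; repeat destruct Rle_dec; lra. }
  assert (Hclamp_id : forall x, a <= x <= b -> clamp x = x).
  { intros x Hx; unfold clamp, Rmax, Rmin; repeat destruct Rle_dec; lra. }
  set (k := fun x => h (clamp x) - h b).
  assert (Hk : forall x, 0 <= k x <= h a - h b).
  { intros x; unfold k; specialize (Hclamp x).
    assert (h b <= h (clamp x)) by (apply Hh; lra).
    assert (h (clamp x) <= h a) by (apply Hh; lra); lra. }
  assert (Hk_mon : nonincreasing_on k a b).
  { intros x y Hx Hxy Hy; unfold k; rewrite !Hclamp_id by lra; specialize (Hh x y Hx Hxy Hy); lra. }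
  destruct (staircase_uniform_cvg k (h a - h b) Hk) as [N Hcvg].
  set (g := fun (n : nat) x => staircase (/ (INR n + 1)) (N * S n) (k x)).
  assert (Hg_int : forall n, is_RInt (g n) a b (RInt (g n) a b)).
  { intros n.
    destruct (is_RInt_mul_staircase (fun _ => 1) k a b (/ (INR n + 1)) (N * S n) (b - a) Hab Hk_mon
               (ex_RInt_const a b 1) ltac:(apply Rinv_0_lt_compat; pose proof (pos_INR n); lra))
      as [v [Hv _]].
    - intros x Hx; rewrite RInt_const; unfold scal; simpl; unfold mult; simpl.
      rewrite Rmult_1_r, Rabs_right; lra.
    - assert (Hgv : is_RInt (g n) a b v).
      { apply (is_RInt_ext (fun x => 1 * staircase (/ (INR n + 1)) (N * S n) (k x))); [| exact Hv].
        intros; unfold g; simpl; ring. }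
      rewrite (is_RInt_unique _ _ _ _ Hgv); exact Hgv. }
  destruct (filterlim_RInt g a b eventually _ k (fun n => RInt (g n) a b) Hg_int Hcvg) as [Ik [_ HIk]].
  exists (Ik + (b - a) * h b).
  apply (is_RInt_ext (fun x => k x + h b)).
  - intros x Hx; rewrite Rmin_left, Rmax_right in Hx by lra.
    unfold k; rewrite Hclamp_id by lra; simpl; ring.
  - exact (is_RInt_plus _ _ a b _ _ HIk (is_RInt_const a b (h b))).
Qed.

Lemma ex_RInt_nonincreasing_Ioc (h : R -> R) a b K :
  a <= b -> (forall x y, a < x -> x <= y -> y <= b -> h y <= h x) ->
  (forall x, a < x <= b -> h x <= K) -> ex_RInt h a b.
Proof.
  intros Hab Hh HK.
  set (h' := fun x => if Rle_dec x a then K else h x).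
  destruct (ex_RInt_nonincreasing h' a b Hab) as [l Hl].
  - intros x y Hx Hxy Hy; unfold h'.
    destruct (Rle_dec y a), (Rle_dec x a); try lra; [apply HK | apply Hh]; lra.
  - exists l; apply (is_RInt_ext h'); [| exact Hl].
    intros x Hx; rewrite Rmin_left, Rmax_right in Hx by lra.
    unfold h'; destruct (Rle_dec x a); [lra | reflexivity].
Qed.

(* Abel's inequality, a form of the second mean value theorem: the weight [h]
   is sliced into level sets, on each of which the integral of [f] is some
   [RInt f a c]. *)
Lemma abel_inequality (f h : R -> R) a b C M :
  a <= b -> nonincreasing_on h a b -> (forall x, a <= x <= b -> 0 <= h x) ->
  ex_RInt f a b -> ex_RInt (fun x => f x * h x) a b ->
  (forall x, a <= x <= b -> Rabs (f x) <= C) ->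
  (forall x, a <= x <= b -> Rabs (RInt f a x) <= M) ->
  Rabs (RInt (fun x => f x * h x) a b) <= M * h a.
Proof.
  intros Hab Hh Hpos Hf Hfh HC HM.
  assert (HC0 : 0 <= C) by (apply Rle_trans with (Rabs (f a)); [apply Rabs_pos | apply HC; lra]).
  assert (HM0 : 0 <= M) by (apply Rle_trans with (Rabs (RInt f a a)); [apply Rabs_pos | apply HM; lra]).
  assert (Hha : 0 <= h a) by (apply Hpos; lra).
  set (I := RInt (fun x => f x * h x) a b).
  apply (le_of_le_add_mul _ _ ((b - a) * C) ltac:(nra)); intros e [He _].
  destruct (INR_unbounded (h a / e)) as [N HN].
  assert (HNe : h a <= INR N * e).
  { apply Rmult_le_reg_r with (/ e); [apply Rinv_0_lt_compat; lra |].
    rewrite Rmult_assoc, Rinv_r, Rmult_1_r by lra; unfold Rdiv in HN; lra. }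
  destruct (is_RInt_mul_staircase f h a b e N M Hab Hh Hf He HM) as [v [Hv Hvb]].
  assert (Hstair : staircase e N (h a) <= h a) by (apply staircase_le; lra).
  assert (Hdiff := is_RInt_minus _ _ a b I v (RInt_correct _ a b Hfh) Hv).
  change (minus I v) with (I - v) in Hdiff.
  assert (Herr : Rabs (I - v) <= (b - a) * C * e).
  { rewrite <- (is_RInt_unique _ _ _ _ Hdiff), Rmult_assoc.
    apply abs_RInt_le_const; [exact Hab | eexists; exact Hdiff |].
    intros t Ht.
    assert (Hht : 0 <= h t <= INR N * e).
    { split; [apply Hpos; exact Ht | apply Rle_trans with (h a); [apply Hh; lra | exact HNe]]. }
    assert (Hs := staircase_approx e N (h t) He Hht).
    change (minus (f t * h t) (f t * staircase e N (h t))) with (f t * h t - f t * staircase e N (h t)).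
    replace (f t * h t - f t * staircase e N (h t)) with (f t * (h t - staircase e N (h t))) by ring.
    rewrite Rabs_mult; apply Rmult_le_compat; try apply Rabs_pos; [apply HC; exact Ht |].
    rewrite Rabs_right; lra. }
  assert (Rabs I <= Rabs v + Rabs (I - v)).
  { replace I with (v + (I - v)) at 1 by ring; apply Rabs_triang. }
  nra.
Qed.

Lemma is_RInt_slope_diff (F : R -> R -> R) (I : R -> R) a b r0 r r' :
  r <> r0 -> r' <> r0 ->
  is_RInt (F r) a b (I r) -> is_RInt (F r0) a b (I r0) -> is_RInt (F r') a b (I r') ->
  is_RInt (fun s => slope (fun q => F q s) r0 r - slope (fun q => F q s) r0 r') a b
          (slope I r0 r - slope I r0 r').
Proof.
  intros Hr Hr' H H0 H'.
  assert (Hc := is_RInt_minus _ _ a b _ _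
                  (is_RInt_scal _ a b (/ (r - r0)) _ (is_RInt_minus _ _ a b _ _ H H0))
                  (is_RInt_scal _ a b (/ (r' - r0)) _ (is_RInt_minus _ _ a b _ _ H' H0))).
  replace (slope I r0 r - slope I r0 r') with
    (minus (scal (/ (r - r0)) (minus (I r) (I r0))) (scal (/ (r' - r0)) (minus (I r') (I r0))))
    by (unfold slope, minus, scal, plus, opp; simpl; unfold mult; simpl; field; lra).
  refine (is_RInt_ext _ _ a b _ _ Hc); intros s _.
  unfold slope, minus, scal, plus, opp; simpl; unfold mult; simpl; field; lra.
Qed.

Lemma RInt_0_nondecreasing (f : R -> R) x y : (forall B, 0 <= B -> ex_RInt f 0 B) ->
  (forall t, x < t < y -> 0 <= f t) -> 0 <= x <= y -> RInt f 0 x <= RInt f 0 y.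
Proof.
  intros Hex Hpos Hxy.
  assert (Hxy_ex : ex_RInt f x y)
    by (apply (ex_RInt_Chasles_2 (V := R_CompleteNormedModule) f 0 x y); [lra | apply Hex; lra]).
  rewrite <- (RInt_Chasles (V := R_CompleteNormedModule) f 0 x y (Hex x ltac:(lra)) Hxy_ex).
  change (plus ?a ?b) with (a + b).
  enough (0 <= RInt f x y) by lra.
  apply RInt_ge_0; [lra | exact Hxy_ex | exact Hpos].
Qed.

Lemma RInt_gen_0_p_infty (f : R -> R) l :
  (forall B, 0 < B -> ex_RInt f 0 B) ->
  filterlim (fun B => RInt f 0 B) (Rbar_locally p_infty) (locally l) ->
  RInt_gen f (at_point 0) (Rbar_locally p_infty) = l.
Proof.
  intros Hex Hl; apply is_RInt_gen_unique; intros P HP.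
  destruct (Hl P HP) as [M HM].
  apply Filter_prod with (fun a => a = 0) (fun b => Rmax M 0 < b).
  - reflexivity.
  - exists (Rmax M 0); auto.
  - intros x y -> Hy; simpl; exists (RInt f 0 y); split.
    + apply (RInt_correct (V := R_CompleteNormedModule)), Hex.
      pose proof (Rmax_r M 0); lra.
    + apply HM; pose proof (Rmax_l M 0); lra.
Qed.

Lemma is_RInt_comp_scale (f : R -> R) u B l : 0 < u -> is_RInt f 0 (B / u) l ->
  is_RInt (fun x => f (x / u)) 0 B (u * l).
Proof.
  intros Hu Hf.
  assert (Hc := is_RInt_comp_lin f (/ u) 0 0 B l).
  rewrite Rmult_0_r, Rplus_0_r, Rplus_0_r in Hc.
  replace (/ u * B) with (B / u) in Hc by (unfold Rdiv; ring).
  apply (is_RInt_ext (fun y => u * scal (/ u) (f (/ u * y + 0))));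
    [| exact (is_RInt_scal _ 0 B u _ (Hc Hf))].
  intros x _; unfold scal; simpl; unfold mult; simpl.
  rewrite Rplus_0_r; replace (/ u * x) with (x / u) by (unfold Rdiv; ring); field; lra.
Qed.

Lemma RInt_gen_0_p_infty_scale (f h : R -> R) (u l : R) : 0 < u ->
  (forall x, 0 < x -> h x = f (x / u)) ->
  (forall B, 0 < B -> ex_RInt f 0 B) ->
  filterlim (fun B => RInt f 0 B) (Rbar_locally p_infty) (locally l) ->
  RInt_gen h (at_point 0) (Rbar_locally p_infty) = u * l.
Proof.
  intros Hu Hh Hex Hl.
  assert (Hint : forall B, 0 < B -> is_RInt h 0 B (u * RInt f 0 (B / u))).
  { intros B HB; apply (is_RInt_ext (fun x => f (x / u))).
    - intros x Hx; rewrite Rmin_left, Rmax_right in Hx by lra; symmetry; apply Hh; lra.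
    - apply is_RInt_comp_scale; [exact Hu |].
      apply (RInt_correct (V := R_CompleteNormedModule)), Hex, Rdiv_lt_0_compat; assumption. }
  apply RInt_gen_0_p_infty; [intros B HB; eexists; apply Hint, HB |].
  apply (filterlim_ext_loc (fun B => 0 + u * RInt f 0 (B / u))).
  - exists 0; intros B HB; rewrite Rplus_0_l; symmetry; apply is_RInt_unique, Hint, HB.
  - replace (u * l) with (0 + u * l) by ring.
    apply (filterlim_plus_scal (Rbar_locally p_infty) (fun _ => 0)); [apply filterlim_const |].
    exact (filterlim_comp _ _ _ _ _ _ _ _ (filterlim_div_p_infty u Hu) Hl).
Qed.

(** * Sections of tail dependence functions *)

Record tdf_section (phi : R -> R) : Prop := {
  section_0 : phi 0 = 0;
  section_lipschitz : forall y z, 0 <= y <= z -> 0 <= phi z - phi y <= z - y;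
  section_le_1 : forall y, 0 <= y -> phi y <= 1;
  section_contract : forall l y z, 0 < l <= 1 -> 0 <= y <= z ->
    l * (phi z - phi y) <= phi (l * z) - phi (l * y) }.

Lemma section_geometric_slopes phi x r : tdf_section phi -> 0 < x -> 1 < r ->
  slope phi (r * x) (r * (r * x)) <= slope phi x (r * x).
Proof.
  intros Hphi Hx Hr.
  assert (H := section_contract phi Hphi (/ r) (r * x) (r * (r * x))).
  replace (/ r * (r * (r * x))) with (r * x) in H by (field; lra).
  replace (/ r * (r * x)) with x in H by (field; lra).
  assert (Hr' : 0 < / r <= 1).
  { split; [apply Rinv_0_lt_compat; lra | rewrite <- Rinv_1; apply Rinv_le_contravar; lra]. }
  specialize (H Hr' ltac:(assert (0 < r * x) by nra; split; nra)).
  unfold slope.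
  replace (r * (r * x) - r * x) with (r * (r * x - x)) by ring.
  assert (0 < r * x - x) by nra.
  apply Rmult_le_reg_r with (r * (r * x - x)); [nra |].
  replace ((phi (r * (r * x)) - phi (r * x)) / (r * (r * x - x)) * (r * (r * x - x)))
    with (phi (r * (r * x)) - phi (r * x)) by (field; nra).
  replace ((phi (r * x) - phi x) / (r * x - x) * (r * (r * x - x))) with (r * (phi (r * x) - phi x))
    by (field; nra).
  apply Rmult_le_reg_l with (/ r); [apply Rinv_0_lt_compat; lra |].
  replace (/ r * (r * (phi (r * x) - phi x))) with (phi (r * x) - phi x) by (field; lra).
  exact H.
Qed.

Lemma section_geometric_grid_concave phi x eta j k :
  tdf_section phi -> 0 < x -> 0 < eta -> (j <= k)%nat ->
  (phi (x * (1 + eta) ^ k) - phi (x * (1 + eta) ^ j)) * (x * (1 + eta) ^ j - x)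
  <= (phi (x * (1 + eta) ^ j) - phi x) * (x * (1 + eta) ^ k - x * (1 + eta) ^ j).
Proof.
  intros Hphi Hx He Hjk.
  set (p := fun l : nat => x * (1 + eta) ^ l).
  assert (HpS : forall l, p (S l) = (1 + eta) * p l) by (intros; unfold p; simpl; ring).
  assert (Hp_pos : forall l, 0 < p l) by (intros; apply Rmult_lt_0_compat; [lra | apply pow_lt; lra]).
  assert (HF : forall l, phi (p (S l)) - phi (p l) = slope phi (p l) (p (S l)) * (p (S l) - p l)).
  { intros l; unfold slope; field; rewrite HpS; specialize (Hp_pos l); nra. }
  assert (Hd : forall l, slope phi (p (S l)) (p (S (S l))) <= slope phi (p l) (p (S l))).
  { intros l; rewrite (HpS (S l)), (HpS l).
    apply section_geometric_slopes; [exact Hphi | apply Hp_pos | lra]. }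
  assert (H := piecewise_linear_concave (fun l => phi (p l)) p (fun l => slope phi (p l) (p (S l))) j k
                 HF ltac:(intros l; rewrite HpS; specialize (Hp_pos l); nra) Hd Hjk).
  unfold p in H; simpl in H; rewrite Rmult_1_r in H; exact H.
Qed.

(* The linear interpolation of [phi] on the geometric grid [x (1 + eta)^l] is
   concave; the grid points just below [y] and [z] are within [eta y] and
   [eta z] of them. *)
Lemma section_concave_approx phi x y z eta :
  tdf_section phi -> 0 < x -> x < y -> y < z -> 0 < eta <= 1 ->
  (phi z - phi y) * (y - x) <= (phi y - phi x) * (z - y) + 5 * (z * z) * eta.
Proof.
  intros Hphi Hx Hxy Hyz He.
  pose proof (section_lipschitz phi Hphi) as Hlip.
  destruct (geometric_grid_exit x eta y Hx ltac:(lra) ltac:(lra)) as [j [Hj Hj']].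
  destruct (geometric_grid_exit x eta z Hx ltac:(lra) ltac:(lra)) as [k [Hk Hk']].
  assert (Hjk : (j <= k)%nat).
  { destruct (Nat.le_gt_cases j k) as [| Hkj]; [assumption | exfalso].
    assert ((1 + eta) ^ S k <= (1 + eta) ^ j) by (apply Rle_pow; [lra | lia]); nra. }
  assert (Hgrid := section_geometric_grid_concave phi x eta j k Hphi Hx ltac:(lra) Hjk).
  replace (x * (1 + eta) ^ S j) with ((1 + eta) * (x * (1 + eta) ^ j)) in Hj' by (simpl; ring).
  replace (x * (1 + eta) ^ S k) with ((1 + eta) * (x * (1 + eta) ^ k)) in Hk' by (simpl; ring).
  set (u := x * (1 + eta) ^ j) in *; set (v := x * (1 + eta) ^ k) in *.
  assert (Hux : x <= u) by (unfold u; pose proof (pow_R1_Rle (1 + eta) j ltac:(lra)); nra).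
  assert (Huv : u <= v) by (unfold u, v; pose proof (Rle_pow (1 + eta) j k ltac:(lra) Hjk); nra).
  assert (Hyu : y - u <= eta * y) by nra.
  assert (Hzv : z - v <= eta * z) by nra.
  assert (A1 := Hlip u y ltac:(lra)); assert (A2 := Hlip v z ltac:(lra)).
  assert (A3 := Hlip x u ltac:(lra)); assert (A4 := Hlip u v ltac:(lra)).
  assert (A5 := Hlip x y ltac:(lra)); assert (A6 := Hlip y z ltac:(lra)).
  assert (B1 : (phi z - phi y) * (y - x) <= ((phi v - phi u) + eta * z) * ((u - x) + eta * y))
    by (apply Rmult_le_compat; lra).
  assert (B2 : (phi u - phi x) * (v - u) <= (phi y - phi x) * (z - y + eta * y))
    by (apply Rmult_le_compat; lra).
  assert (eta * z * (u - x) <= eta * z * z) by (apply Rmult_le_compat_l; nra).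
  assert ((phi v - phi u) * (eta * y) <= z * (eta * z)) by (apply Rmult_le_compat; nra).
  assert (eta * z * (eta * y) <= eta * z * z) by (apply Rmult_le_compat_l; nra).
  assert ((phi y - phi x) * (eta * y) <= z * (eta * z)) by (apply Rmult_le_compat; nra).
  nra.
Qed.

Lemma section_concave phi x y z : tdf_section phi -> 0 < x -> x < y -> y < z ->
  slope phi y z <= slope phi x y.
Proof.
  intros Hphi Hx Hxy Hyz.
  assert (Hprod : (phi z - phi y) * (y - x) <= (phi y - phi x) * (z - y)).
  { apply (le_of_le_add_mul _ _ (5 * (z * z)) ltac:(nra)); intros eta He.
    exact (section_concave_approx phi x y z eta Hphi Hx Hxy Hyz He). }
  unfold slope; apply Rmult_le_reg_r with ((z - y) * (y - x)); [nra |].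
  replace ((phi z - phi y) / (z - y) * ((z - y) * (y - x))) with ((phi z - phi y) * (y - x))
    by (field; lra).
  replace ((phi y - phi x) / (y - x) * ((z - y) * (y - x))) with ((phi y - phi x) * (z - y))
    by (field; lra).
  exact Hprod.
Qed.

Section ConcaveSection.

Variable phi : R -> R.
Hypothesis Hphi : tdf_section phi.

Lemma section_bounds y : 0 <= y -> 0 <= phi y <= y.
Proof.
  intros Hy; pose proof (section_lipschitz phi Hphi 0 y ltac:(lra)).
  rewrite (section_0 phi Hphi) in *; lra.
Qed.

Lemma section_slope_bounds x y : 0 <= x < y -> 0 <= slope phi x y <= 1.
Proof.
  intros Hxy; pose proof (section_lipschitz phi Hphi x y ltac:(lra)) as H; unfold slope.
  split; [apply Rdiv_le_0_compat; lra |].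
  apply Rmult_le_reg_r with (y - x); [lra |].
  unfold Rdiv; rewrite Rmult_assoc, Rinv_l; lra.
Qed.

Lemma section_slope_between x y z : 0 < x -> x < y -> y < z ->
  slope phi y z <= slope phi x z <= slope phi x y.
Proof.
  intros Hx Hxy Hyz.
  assert (Hc := section_concave phi x y z Hphi Hx Hxy Hyz).
  assert (Hsplit : slope phi x z * (z - x) = slope phi x y * (y - x) + slope phi y z * (z - y)).
  { unfold slope; field; lra. }
  split; apply Rmult_le_reg_r with (z - x); lra || nra.
Qed.

Lemma section_right_derivative y : 0 < y ->
  filterlim (fun h => slope phi y (y + h)) (at_right 0) (locally (Derive phi y)) /\
  (forall h, 0 < h -> slope phi y (y + h) <= Derive phi y).
Proof.
  intros Hy.
  destruct (bounded_sup (fun h => slope phi y (y + h)) (fun h => 0 < h) 1 1 Rlt_0_1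
              (fun h Hh => proj2 (section_slope_bounds y (y + h) ltac:(lra)))) as [l [Hle Happ]].
  assert (Hlim : filterlim (fun h => slope phi y (y + h)) (at_right 0) (locally l)).
  { intros P [eps HP].
    destruct (Happ eps (cond_pos eps)) as [h0 [Hh0 Hl0]].
    exists (mkposreal h0 Hh0); intros h Hh Hh_pos; apply HP.
    change (Rabs (h - 0) < h0) in Hh; rewrite Rminus_0_r, Rabs_right in Hh by lra.
    assert (slope phi y (y + h0) <= slope phi y (y + h)).
    { apply (section_slope_between y (y + h) (y + h0)); lra. }
    assert (slope phi y (y + h) <= l) by (apply Hle; exact Hh_pos).
    change (Rabs (slope phi y (y + h) - l) < eps); apply Rabs_def1; lra. }
  replace (Derive phi y) with l; [split; assumption |].
  symmetry; apply Derive_right.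
  apply (filterlim_ext (fun h => slope phi y (y + h))); [| exact Hlim].
  intros h; unfold slope; replace (y + h - y) with h by ring; reflexivity.
Qed.

Lemma section_Derive_le_slope x y : 0 < x -> x < y -> Derive phi y <= slope phi x y.
Proof.
  intros Hx Hxy.
  apply (filterlim_le (F := at_right 0) (fun h => slope phi y (y + h)) (fun _ => slope phi x y)
           (Derive phi y) (slope phi x y)).
  - exists (mkposreal 1 Rlt_0_1); intros h _ Hh.
    apply (section_concave phi x y (y + h) Hphi); lra.
  - apply (section_right_derivative y ltac:(lra)).
  - apply filterlim_const.
Qed.

Lemma section_Derive_bounds y : 0 < y -> 0 <= Derive phi y <= 1.
Proof.
  intros Hy; destruct (section_right_derivative y Hy) as [Hlim Hle]; split.
  - apply Rle_trans with (slope phi y (y + 1));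
      [apply section_slope_bounds | apply Hle]; lra.
  - apply (filterlim_le (F := at_right 0) (fun h => slope phi y (y + h)) (fun _ => 1)
             (Derive phi y) 1); [| exact Hlim | apply filterlim_const].
    exists (mkposreal 1 Rlt_0_1); intros h _ Hh; apply section_slope_bounds; lra.
Qed.

Lemma section_Derive_nonincreasing x y : 0 < x -> x <= y -> Derive phi y <= Derive phi x.
Proof.
  intros Hx Hxy; destruct (Req_dec x y) as [<- | Hne]; [lra |].
  apply Rle_trans with (slope phi x y); [apply section_Derive_le_slope; lra |].
  assert (H := proj2 (section_right_derivative x Hx) (y - x) ltac:(lra)).
  replace (x + (y - x)) with y in H by ring; exact H.
Qed.

Lemma section_mul_Derive_le y : 0 < y -> y * Derive phi y <= phi y.
Proof.
  intros Hy; destruct (section_Derive_bounds y Hy) as [HG0 HG1].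
  apply le_epsilon; intros eps Heps.
  set (x := Rmin (y / 2) eps).
  assert (Hx : 0 < x) by (apply Rmin_pos; lra).
  assert (Hxy : x < y) by (unfold x; pose proof (Rmin_l (y / 2) eps); lra).
  assert (Hxe : x <= eps) by apply Rmin_r.
  assert (Hs := section_Derive_le_slope x y Hx Hxy); unfold slope in Hs.
  apply Rmult_le_compat_r with (r := y - x) in Hs; [| lra].
  replace ((phi y - phi x) / (y - x) * (y - x)) with (phi y - phi x) in Hs by (field; lra).
  pose proof (section_bounds x ltac:(lra)); nra.
Qed.

Lemma section_right_slope_close y eps : 0 < y -> 0 < eps ->
  exists h, 0 < h <= y / 2 /\ Derive phi y - eps < slope phi y (y + h).
Proof.
  intros Hy Heps.
  destruct (proj1 (section_right_derivative y Hy) (fun v => Rabs (v - Derive phi y) < eps)) as [d Hd].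
  { exists (mkposreal eps Heps); intros v Hv; exact Hv. }
  set (h := Rmin (d / 2) (y / 2)).
  assert (Hh : 0 < h < d /\ h <= y / 2).
  { assert (0 < h) by (apply Rmin_pos; pose proof (cond_pos d); lra).
    pose proof (Rmin_l (d / 2) (y / 2)); pose proof (Rmin_r (d / 2) (y / 2)); pose proof (cond_pos d).
    unfold h in *; lra. }
  exists h; split; [lra |].
  assert (Habs := Hd h ltac:(change (Rabs (h - 0) < d); rewrite Rminus_0_r, Rabs_right; lra) ltac:(lra)).
  apply Rabs_def2 in Habs; lra.
Qed.

End ConcaveSection.

Definition tangent_intercept (phi : R -> R) (w : R) : R := phi w - w * Derive phi w.

Section DifferentiableSection.

Variable phi : R -> R.
Hypothesis Hphi : tdf_section phi.
Hypothesis Hd : derivable_pos phi.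

(* [Derive phi u] is squeezed between [slope phi u (y + h)] and
   [slope phi (y - k) u], which are continuous in [u] and, at [u = y], close
   to [Derive phi y] from below and above. *)
Lemma section_Derive_continuous y : 0 < y -> continuity_pt (Derive phi) y.
Proof.
  intros Hy; apply continuity_pt_locally; intros eps.
  destruct (section_right_slope_close phi Hphi y (eps / 2) Hy ltac:(pose proof (cond_pos eps); lra))
    as [h [Hh Hsh]].
  destruct (left_slope_close phi y (eps / 2) (y / 2) (Hd y Hy) ltac:(pose proof (cond_pos eps); lra)
              ltac:(lra)) as [k [Hk Hsk]].
  assert (Hlow := proj1 (continuity_pt_locally _ _)
                    (proj1 (continuity_pt_slope phi y (y + h) (Hd y Hy) ltac:(lra))) (pos_div_2 eps)).
  assert (Hup := proj1 (continuity_pt_locally _ _)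
                   (proj2 (continuity_pt_slope phi y (y - k) (Hd y Hy) ltac:(lra))) (pos_div_2 eps)).
  assert (Hnear : locally y (fun u => y - k < u < y + h)).
  { exists (mkposreal _ (Rmin_pos k h ltac:(lra) ltac:(lra))); intros u Hu.
    change (Rabs (u - y) < Rmin k h) in Hu; apply Rabs_def2 in Hu.
    pose proof (Rmin_l k h); pose proof (Rmin_r k h); lra. }
  generalize (filter_and _ _ Hnear (filter_and _ _ Hlow Hup)); apply filter_imp.
  intros u [Hu [Hl Hr]]; simpl in Hl, Hr; apply Rabs_def2 in Hl; apply Rabs_def2 in Hr.
  assert (Hge : slope phi u (y + h) <= Derive phi u).
  { assert (H := proj2 (section_right_derivative phi Hphi u ltac:(lra)) (y + h - u) ltac:(lra)).
    replace (u + (y + h - u)) with (y + h) in H by ring; exact H. }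
  assert (Hle : Derive phi u <= slope phi (y - k) u) by (apply (section_Derive_le_slope phi Hphi); lra).
  apply Rabs_def1; lra.
Qed.


Lemma section_mul_Derive_small_at_infty eps : 0 < eps ->
  exists A, 0 < A /\ forall w, A <= w -> w * Derive phi w <= eps.
Proof.
  intros Heps.
  destruct (bounded_sup phi (fun y => 0 <= y) 0 1 (Rle_refl 0) (section_le_1 phi Hphi))
    as [S [HS Happ]].
  destruct (Happ (eps / 2) ltac:(lra)) as [y0 [Hy0 Hy0S]].
  exists (2 * y0 + 1); split; [lra |]; intros w Hw.
  assert (Hs := section_Derive_le_slope phi Hphi (w / 2) w ltac:(lra) ltac:(lra)).
  unfold slope in Hs; apply Rmult_le_compat_l with (r := w) in Hs; [| lra].
  replace (w * ((phi w - phi (w / 2)) / (w - w / 2))) with (2 * (phi w - phi (w / 2))) in Hs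
    by (field; lra).
  assert (phi y0 <= phi (w / 2)) by (pose proof (section_lipschitz phi Hphi y0 (w / 2)); lra).
  assert (phi w <= S) by (apply HS; lra).
  lra.
Qed.

(* Small [z] are handled by [w * Derive phi w <= w], large ones by
   [section_mul_Derive_small_at_infty], and the compact range in between by
   uniform continuity of [Derive phi]. *)
Lemma section_mul_Derive_scale_uniform eps : 0 < eps ->
  exists del, 0 < del <= 1 / 2 /\ forall z l, 0 < z -> Rabs (l - 1) < del ->
    Rabs (l * z * Derive phi (l * z) - z * Derive phi z) <= eps.
Proof.
  intros Heps.
  destruct (section_mul_Derive_small_at_infty (eps / 2) ltac:(lra)) as [A [HA HAbig]].
  destruct (Heine_cor2 (f := Derive phi) (a := eps / 8) (b := 3 * A)
              ltac:(intros x Hx; apply section_Derive_continuous; lra)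
              (mkposreal (eps / (4 * A)) ltac:(apply Rdiv_lt_0_compat; lra))) as [du Hdu].
  simpl in Hdu.
  set (del := Rmin (1 / 2) (Rmin (eps / (4 * A)) (du / (2 * A)))).
  assert (Hdel : 0 < del <= 1 / 2 /\ del * (2 * A) <= eps / 2 /\ del * (2 * A) <= du).
  { assert (0 < eps / (4 * A)) by (apply Rdiv_lt_0_compat; lra).
    assert (0 < du / (2 * A)) by (pose proof (cond_pos du); apply Rdiv_lt_0_compat; lra).
    assert (del <= eps / (4 * A)) by (unfold del; rewrite Rmin_r; apply Rmin_l).
    assert (del <= du / (2 * A)) by (unfold del; rewrite Rmin_r; apply Rmin_r).
    split; [split; [repeat apply Rmin_pos; lra | apply Rmin_l] | split].
    - apply Rle_trans with (eps / (4 * A) * (2 * A)); [apply Rmult_le_compat_r; lra | right; field; lra].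
    - apply Rle_trans with (du / (2 * A) * (2 * A)); [apply Rmult_le_compat_r; lra | right; field; lra]. }
  exists del; split; [apply Hdel |]; intros z l Hz Hl.
  assert (Hl' := Hl); apply Rabs_def2 in Hl'.
  assert (Hw : z / 2 <= l * z <= 3 * z / 2) by (split; nra).
  destruct (section_Derive_bounds phi Hphi z Hz) as [Gz0 Gz1].
  destruct (section_Derive_bounds phi Hphi (l * z) ltac:(lra)) as [Gw0 Gw1].
  destruct (Rle_dec z (eps / 4)) as [Hsmall | Hza].
  { apply Rabs_le; split; nra. }
  destruct (Rle_dec (2 * A) z) as [Hlarge | HzA].
  { assert (l * z * Derive phi (l * z) <= eps / 2) by (apply HAbig; lra).
    assert (z * Derive phi z <= eps / 2) by (apply HAbig; lra).
    apply Rabs_le; split; nra. }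
  assert (Hwz : Rabs (l * z - z) < del * (2 * A)).
  { replace (l * z - z) with ((l - 1) * z) by ring.
    rewrite Rabs_mult, (Rabs_right z) by lra.
    apply Rlt_le_trans with (del * z); [apply Rmult_lt_compat_r | apply Rmult_le_compat_l]; lra. }
  assert (HG : Rabs (Derive phi (l * z) - Derive phi z) < eps / (4 * A)) by (apply Hdu; lra).
  assert (z * Rabs (Derive phi (l * z) - Derive phi z) <= eps / 2).
  { apply Rle_trans with (2 * A * (eps / (4 * A))); [apply Rmult_le_compat; try lra; apply Rabs_pos |].
    right; field; lra. }
  pose proof (Rabs_mul_diff_le (l * z) z (Derive phi (l * z)) (Derive phi z) Gw0 ltac:(lra)).
  assert (Rabs (l * z - z) * Derive phi (l * z) <= eps / 2).
  { apply Rle_trans with (del * (2 * A) * 1); [apply Rmult_le_compat; try lra; apply Rabs_pos | lra]. }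
  lra.
Qed.

Lemma section_increment_le_Derive u v : 0 < u -> u <= v -> phi v - phi u <= (v - u) * Derive phi u.
Proof.
  intros Hu Huv; destruct (Req_dec u v) as [<- | Hne]; [lra |].
  assert (H := proj2 (section_right_derivative phi Hphi u Hu) (v - u) ltac:(lra)).
  replace (u + (v - u)) with v in H by ring; unfold slope in H.
  apply Rmult_le_compat_l with (r := v - u) in H; [| lra].
  replace ((v - u) * ((phi v - phi u) / (v - u))) with (phi v - phi u) in H by (field; lra).
  exact H.
Qed.

Lemma tangent_intercept_bounds w : 0 < w -> 0 <= tangent_intercept phi w <= 1.
Proof.
  intros Hw; unfold tangent_intercept.
  pose proof (section_mul_Derive_le phi Hphi w Hw); pose proof (section_Derive_bounds phi Hphi w Hw).
  pose proof (section_le_1 phi Hphi w ltac:(lra)); split; nra.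
Qed.

Lemma section_scale_lipschitz z l : 0 < z -> 1 / 2 <= l <= 3 / 2 ->
  Rabs (phi (l * z) - phi z) <= 2 * Rabs (l - 1).
Proof.
  intros Hz Hl.
  destruct (Rle_dec 1 l) as [Hl1 | Hl1].
  - assert (H := section_increment_le_Derive z (l * z) Hz ltac:(nra)).
    pose proof (section_mul_Derive_le phi Hphi z Hz); pose proof (section_Derive_bounds phi Hphi z Hz).
    pose proof (section_le_1 phi Hphi z ltac:(lra)).
    pose proof (section_lipschitz phi Hphi z (l * z) ltac:(nra)).
    rewrite (Rabs_right (l - 1)), Rabs_right by lra; nra.
  - assert (H := section_increment_le_Derive (l * z) z ltac:(nra) ltac:(nra)).
    pose proof (section_mul_Derive_le phi Hphi (l * z) ltac:(nra)).
    pose proof (section_Derive_bounds phi Hphi (l * z) ltac:(nra)).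
    pose proof (section_le_1 phi Hphi (l * z) ltac:(nra)).
    pose proof (section_lipschitz phi Hphi (l * z) z ltac:(nra)).
    assert (Hk : (z - l * z) * Derive phi (l * z) <= 2 * (1 - l)).
    { assert (z * Derive phi (l * z) <= 2) by (apply Rmult_le_reg_l with l; nra); nra. }
    rewrite Rabs_minus_sym, Rabs_right, Rabs_left1 by lra; lra.
Qed.

Lemma tangent_intercept_scale_uniform eps : 0 < eps ->
  exists del, 0 < del <= 1 / 2 /\ forall z l, 0 < z -> Rabs (l - 1) < del ->
    Rabs (tangent_intercept phi (l * z) - tangent_intercept phi z) <= eps.
Proof.
  intros Heps.
  destruct (section_mul_Derive_scale_uniform (eps / 2) ltac:(lra)) as [del [Hdel HU]].
  exists (Rmin del (eps / 4)); split.
  - split; [apply Rmin_pos; lra |]; pose proof (Rmin_l del (eps / 4)); lra.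
  - intros z l Hz Hl.
    assert (Hl1 : Rabs (l - 1) < del) by (pose proof (Rmin_l del (eps / 4)); lra).
    assert (Hl2 : Rabs (l - 1) < eps / 4) by (pose proof (Rmin_r del (eps / 4)); lra).
    assert (Hl3 := Hl1); apply Rabs_def2 in Hl3.
    assert (HL := section_scale_lipschitz z l Hz ltac:(lra)).
    specialize (HU z l Hz Hl1).
    unfold tangent_intercept.
    replace (phi (l * z) - l * z * Derive phi (l * z) - (phi z - z * Derive phi z))
      with ((phi (l * z) - phi z) - (l * z * Derive phi (l * z) - z * Derive phi z)) by ring.
    unfold Rminus at 1; apply Rle_trans with (1 := Rabs_triang _ _); rewrite Rabs_Ropp; lra.
Qed.


Lemma is_derive_scaled_section x c : 0 < x -> 0 < c ->
  is_derive (fun c => phi (c * x) / c) c (- tangent_intercept phi (c * x) / (c * c)).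
Proof.
  intros Hx Hc; unfold tangent_intercept; auto_derive.
  - split; [apply Hd; nra | lra].
  - change (fun y => phi y) with phi; field; lra.
Qed.

Lemma tangent_intercept_near_uniform r0 eps : 0 < r0 -> 0 < eps ->
  exists del, 0 < del /\ forall c x, Rabs (c - r0) < del -> 0 < x ->
    Rabs (tangent_intercept phi (c * x) - tangent_intercept phi (r0 * x)) <= eps.
Proof.
  intros Hr0 Heps.
  destruct (tangent_intercept_scale_uniform eps Heps) as [d [Hdpos HT]].
  exists (r0 * d); split; [nra |]; intros c x Hc Hx.
  replace (c * x) with (c / r0 * (r0 * x)) by (field; lra).
  apply HT; [nra |].
  replace (c / r0 - 1) with ((c - r0) * / r0) by (field; lra).
  rewrite Rabs_mult, (Rabs_right (/ r0)) by (left; apply Rinv_0_lt_compat; lra).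
  apply Rmult_lt_reg_r with r0; [lra |]; rewrite Rmult_assoc, Rinv_l by lra; nra.
Qed.

Lemma scaled_section_deriv_uniform r0 eps : 0 < r0 -> 0 < eps ->
  exists del, 0 < del <= r0 / 2 /\ forall c x, Rabs (c - r0) < del -> 0 < x ->
    Rabs (tangent_intercept phi (c * x) / (c * c) - tangent_intercept phi (r0 * x) / (r0 * r0)) <= eps.
Proof.
  intros Hr0 Heps.
  destruct (tangent_intercept_near_uniform r0 (eps * (r0 * r0) / 8) Hr0
              ltac:(apply Rdiv_lt_0_compat; [apply Rmult_lt_0_compat; nra | lra])) as [d1 [Hd1 HT]].
  assert (Hinv : continuity_pt (fun c => / (c * c)) r0).
  { apply continuity_pt_filterlim.
    apply (ex_derive_continuous (K := R_AbsRing) (V := R_NormedModule) (fun c => / (c * c))).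
    auto_derive; nra. }
  destruct (proj1 (continuity_pt_locally _ _) Hinv (mkposreal (eps / 2) ltac:(lra))) as [d2 Hd2].
  set (del := Rmin (r0 / 2) (Rmin d1 d2)).
  assert (Hdel : 0 < del <= r0 / 2 /\ del <= d1 /\ del <= d2).
  { unfold del; pose proof (cond_pos d2).
    pose proof (Rmin_l (r0 / 2) (Rmin d1 d2)); pose proof (Rmin_r (r0 / 2) (Rmin d1 d2)).
    pose proof (Rmin_l d1 d2); pose proof (Rmin_r d1 d2).
    repeat split; try lra; repeat apply Rmin_pos; lra. }
  exists del; split; [apply Hdel |]; intros c x Hc Hx.
  assert (Hc' := Hc); apply Rabs_def2 in Hc'.
  specialize (HT c x ltac:(lra) Hx).
  assert (Hinv_c : Rabs (/ (c * c) - / (r0 * r0)) < eps / 2)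
    by (apply Hd2; change (Rabs (c - r0) < d2); lra).
  assert (Hc_ge : / (c * c) <= 4 / (r0 * r0)).
  { replace (4 / (r0 * r0)) with (/ ((r0 / 2) * (r0 / 2))) by (field; lra).
    apply Rinv_le_contravar; [nra | apply Rmult_le_compat; lra]. }
  destruct (tangent_intercept_bounds (r0 * x) ltac:(nra)) as [HT0 HT1].
  assert (Hcc : 0 <= / (c * c)) by (left; apply Rinv_0_lt_compat; nra).
  unfold Rdiv; apply Rle_trans with (1 := Rabs_mul_diff_le _ _ _ _ Hcc HT0).
  assert (Rabs (tangent_intercept phi (c * x) - tangent_intercept phi (r0 * x)) * / (c * c) <= eps / 2).
  { apply Rle_trans with (eps * (r0 * r0) / 8 * (4 / (r0 * r0))).
    - apply Rmult_le_compat; [apply Rabs_pos | exact Hcc | exact HT | exact Hc_ge].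
    - right; field; lra. }
  assert (tangent_intercept phi (r0 * x) * Rabs (/ (c * c) - / (r0 * r0)) <= eps / 2).
  { apply Rle_trans with (1 * (eps / 2)); [apply Rmult_le_compat; try lra; apply Rabs_pos | lra]. }
  lra.
Qed.

Lemma scaled_section_slope_mvt r0 r x : 0 < r0 -> 0 < r -> r <> r0 -> 0 < x ->
  exists c, Rmin r0 r <= c <= Rmax r0 r /\
    slope (fun c => phi (c * x) / c) r0 r = - tangent_intercept phi (c * x) / (c * c).
Proof.
  intros Hr0 Hr Hne Hx.
  assert (Hmin : 0 < Rmin r0 r) by (apply Rmin_pos; assumption).
  destruct (MVT_gen (fun c => phi (c * x) / c) r0 r
              (fun c => - tangent_intercept phi (c * x) / (c * c))) as [c [Hc Heq]].
  - intros c Hc; apply is_derive_scaled_section; lra.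
  - intros c Hc; apply continuity_pt_filterlim.
    apply (ex_derive_continuous (K := R_AbsRing) (V := R_NormedModule) (fun c => phi (c * x) / c)).
    eexists; apply is_derive_scaled_section; lra.
  - exists c; split; [exact Hc |]; unfold slope; rewrite Heq; field; lra.
Qed.

Lemma scaled_section_slope_cauchy r0 eps : 0 < r0 -> 0 < eps ->
  exists del, 0 < del <= r0 / 2 /\ forall r r' x,
    0 < Rabs (r - r0) < del -> 0 < Rabs (r' - r0) < del -> 0 <= x ->
    Rabs (slope (fun c => phi (c * x) / c) r0 r - slope (fun c => phi (c * x) / c) r0 r') <= eps.
Proof.
  intros Hr0 Heps.
  destruct (scaled_section_deriv_uniform r0 (eps / 2) Hr0 ltac:(lra)) as [del [Hdel Hunif]].
  exists del; split; [exact Hdel |]; intros r r' x Hr Hr' Hx.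
  destruct (Req_dec x 0) as [-> | Hx0].
  { unfold slope; rewrite !Rmult_0_r, (section_0 phi Hphi).
    unfold Rdiv; rewrite !Rmult_0_l, Rminus_0_r, !Rmult_0_l, Rminus_0_r, Rabs_R0; lra. }
  assert (Happrox : forall r1, 0 < Rabs (r1 - r0) < del ->
            Rabs (slope (fun c => phi (c * x) / c) r0 r1 + tangent_intercept phi (r0 * x) / (r0 * r0))
              <= eps / 2).
  { intros r1 Hr1; assert (Hr1' := proj2 Hr1); apply Rabs_def2 in Hr1'.
    assert (Hne : r1 <> r0) by (intros ->; rewrite Rminus_diag, Rabs_R0 in Hr1; lra).
    destruct (scaled_section_slope_mvt r0 r1 x Hr0 ltac:(lra) Hne ltac:(lra)) as [c [Hc ->]].
    assert (Hcr0 : Rabs (c - r0) < del).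
    { apply Rabs_def1; unfold Rmin, Rmax in Hc; destruct Rle_dec; lra. }
    specialize (Hunif c x Hcr0 ltac:(lra)).
    replace (- tangent_intercept phi (c * x) / (c * c) + tangent_intercept phi (r0 * x) / (r0 * r0))
      with (- (tangent_intercept phi (c * x) / (c * c) - tangent_intercept phi (r0 * x) / (r0 * r0)))
      by (unfold Rdiv; ring).
    rewrite Rabs_Ropp; exact Hunif. }
  assert (H1 := Happrox r Hr); assert (H2 := Happrox r' Hr').
  set (D := tangent_intercept phi (r0 * x) / (r0 * r0)) in *.
  replace (slope (fun c => phi (c * x) / c) r0 r - slope (fun c => phi (c * x) / c) r0 r')
    with ((slope (fun c => phi (c * x) / c) r0 r + D) - (slope (fun c => phi (c * x) / c) r0 r' + D))
    by ring.
  unfold Rminus at 1; apply Rle_trans with (1 := Rabs_triang _ _); rewrite Rabs_Ropp; lra.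
Qed.

End DifferentiableSection.

(** * The kernel integral *)

Definition bounded_nonincreasing (g : R -> R) : Prop :=
  (forall s, 0 < s -> 0 <= g s <= 1) /\ (forall x y, 0 < x -> x <= y -> g y <= g x).

Definition kernel_integral (phi g : R -> R) (r : R) : R :=
  RInt_gen (fun s => Derive phi (r * s) * g s) (at_point 0) (Rbar_locally p_infty).

Section KernelIntegral.

Variables phi g : R -> R.
Hypothesis Hphi : tdf_section phi.
Hypothesis Hg : bounded_nonincreasing g.
Hypothesis Hd : derivable_pos phi.

Lemma ex_RInt_kernel r B : 0 < r -> 0 <= B -> ex_RInt (fun s => Derive phi (r * s) * g s) 0 B.
Proof.
  intros Hr HB; destruct Hg as [Hgb Hgd].
  apply (ex_RInt_nonincreasing_Ioc _ 0 B 1 HB).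
  - intros x y Hx Hxy Hy.
    assert (Derive phi (r * y) <= Derive phi (r * x))
      by (apply (section_Derive_nonincreasing phi Hphi); nra).
    pose proof (section_Derive_bounds phi Hphi (r * y) ltac:(nra)).
    pose proof (Hgb y ltac:(lra)); specialize (Hgd x y Hx Hxy); nra.
  - intros x Hx; pose proof (section_Derive_bounds phi Hphi (r * x) ltac:(nra)).
    pose proof (Hgb x ltac:(lra)); nra.
Qed.

Lemma ex_RInt_Derive_scaled r B : 0 < r -> 0 <= B -> ex_RInt (fun s => Derive phi (r * s)) 0 B.
Proof.
  intros Hr HB; apply (ex_RInt_nonincreasing_Ioc _ 0 B 1 HB).
  - intros x y Hx Hxy Hy; apply (section_Derive_nonincreasing phi Hphi); nra.
  - intros x Hx; apply (section_Derive_bounds phi Hphi); nra.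
Qed.

Lemma is_RInt_Derive_scaled_pos r e x : 0 < r -> 0 < e -> e <= x ->
  is_RInt (fun s => Derive phi (r * s)) e x (phi (r * x) / r - phi (r * e) / r).
Proof.
  intros Hr He Hex.
  apply (is_RInt_derive (fun s => phi (r * s) / r) (fun s => Derive phi (r * s)) e x).
  - intros s Hs; rewrite Rmin_left, Rmax_right in Hs by lra.
    auto_derive; [apply Hd; nra | change (fun y => phi y) with phi; field; lra].
  - intros s Hs; rewrite Rmin_left, Rmax_right in Hs by lra.
    apply (filterlim_comp _ _ _ (fun s => r * s) (Derive phi) _ (locally (r * s))).
    + apply (ex_derive_continuous (K := R_AbsRing) (V := R_NormedModule) (fun s => r * s)).
      auto_derive; exact I.
    + apply continuity_pt_filterlim, (section_Derive_continuous phi Hphi Hd (r * s)); nra.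
Qed.

(* [Derive phi] is junk at [0], so the fundamental theorem is only available on
   [[e, x]]; both the integral over [[0, e]] and [phi (r e) / r] lie in [[0, e]]. *)
Lemma is_RInt_Derive_scaled r x : 0 < r -> 0 <= x ->
  is_RInt (fun s => Derive phi (r * s)) 0 x (phi (r * x) / r).
Proof.
  intros Hr Hx.
  destruct (Req_dec x 0) as [-> | Hx0].
  { rewrite Rmult_0_r, (section_0 phi Hphi); replace (0 / r) with 0 by (field; lra).
    apply (is_RInt_point (V := R_NormedModule)). }
  replace (phi (r * x) / r) with (RInt (fun s => Derive phi (r * s)) 0 x);
    [apply (RInt_correct (V := R_CompleteNormedModule)), ex_RInt_Derive_scaled; lra |].
  apply (eq_of_close _ _ x ltac:(lra)); intros e He.
  assert (Hchasles := RInt_Chasles (V := R_CompleteNormedModule) (fun s => Derive phi (r * s)) 0 e x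
                        (ex_RInt_Derive_scaled r e Hr ltac:(lra))
                        (ex_RInt_Chasles_2 _ 0 e x ltac:(lra) (ex_RInt_Derive_scaled r x Hr Hx))).
  change (plus ?a ?b) with (a + b) in Hchasles.
  rewrite (is_RInt_unique _ _ _ _ (is_RInt_Derive_scaled_pos r e x Hr ltac:(lra) ltac:(lra))) in Hchasles.
  assert (Hsmall : 0 <= RInt (fun s => Derive phi (r * s)) 0 e <= e).
  { split.
    - apply RInt_ge_0; [lra | apply ex_RInt_Derive_scaled; lra |].
      intros s Hs; apply (section_Derive_bounds phi Hphi); nra.
    - apply Rle_trans with (RInt (fun _ => 1) 0 e).
      + apply RInt_le; [lra | apply ex_RInt_Derive_scaled; lra | apply ex_RInt_const |].
        intros s Hs; apply (section_Derive_bounds phi Hphi); nra.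
      + rewrite RInt_const; unfold scal; simpl; unfold mult; simpl; lra. }
  assert (Hphie : 0 <= phi (r * e) / r <= e).
  { pose proof (section_bounds phi Hphi (r * e) ltac:(nra)).
    split; [apply Rdiv_le_0_compat; lra |].
    apply Rmult_le_reg_r with r; [lra |]; unfold Rdiv; rewrite Rmult_assoc, Rinv_l by lra; lra. }
  rewrite <- Hchasles; apply Rabs_le; lra.
Qed.

Lemma kernel_bounds r t : 0 < r -> 0 < t ->
  0 <= Derive phi (r * t) * g t <= Derive phi (r * t).
Proof.
  intros Hr Ht; pose proof (section_Derive_bounds phi Hphi (r * t) ltac:(nra)).
  pose proof (proj1 Hg t Ht); split; nra.
Qed.

Lemma kernel_integral_cvg r : 0 < r ->
  filterlim (fun B => RInt (fun s => Derive phi (r * s) * g s) 0 B)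
            (Rbar_locally p_infty) (locally (kernel_integral phi g r)).
Proof.
  intros Hr.
  destruct (nondecreasing_bounded_cvg_p_infty
              (fun B => RInt (fun s => Derive phi (r * s) * g s) 0 B) (/ r)) as [l Hl].
  - intros x y Hx Hxy; apply RInt_0_nondecreasing; [intros B HB; apply ex_RInt_kernel; lra | | lra].
    intros t Ht; apply (kernel_bounds r t Hr); lra.
  - intros x Hx; apply Rle_trans with (RInt (fun s => Derive phi (r * s)) 0 x).
    + apply RInt_le; [lra | apply ex_RInt_kernel; lra | apply ex_RInt_Derive_scaled; lra |].
      intros t Ht; apply (kernel_bounds r t Hr); lra.
    + rewrite (is_RInt_unique _ _ _ _ (is_RInt_Derive_scaled r x Hr ltac:(lra))).
      pose proof (section_le_1 phi Hphi (r * x) ltac:(nra)).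
      unfold Rdiv; rewrite <- (Rmult_1_l (/ r)) at 2.
      apply Rmult_le_compat_r; [left; apply Rinv_0_lt_compat |]; lra.
  - replace (kernel_integral phi g r) with l; [exact Hl |].
    symmetry; apply RInt_gen_0_p_infty; [intros B HB; apply ex_RInt_kernel; lra | exact Hl].
Qed.

Lemma Derive_scaled_slope_bound r0 q s : 0 < r0 -> 0 < q -> q <> r0 -> 0 <= s ->
  Rabs (slope (fun q => Derive phi (q * s)) r0 q) <= / Rabs (q - r0).
Proof.
  intros Hr0 Hq Hqr0 Hs; unfold slope, Rdiv; rewrite Rabs_mult, Rabs_inv.
  rewrite <- (Rmult_1_l (/ Rabs (q - r0))) at 2.
  apply Rmult_le_compat_r; [left; apply Rinv_0_lt_compat, Rabs_pos_lt; lra |].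
  destruct (Req_dec s 0) as [-> | Hs0]; [rewrite !Rmult_0_r, Rminus_diag, Rabs_R0; lra |].
  pose proof (section_Derive_bounds phi Hphi (q * s) ltac:(nra)).
  pose proof (section_Derive_bounds phi Hphi (r0 * s) ltac:(nra)).
  apply Rabs_le; lra.
Qed.

Lemma kernel_truncated_slope_cauchy r0 r r' B M :
  0 < r0 -> 0 < r -> 0 < r' -> r <> r0 -> r' <> r0 -> 0 < B ->
  (forall x, 0 <= x -> Rabs (slope (fun c => phi (c * x) / c) r0 r
                             - slope (fun c => phi (c * x) / c) r0 r') <= M) ->
  Rabs (slope (fun q => RInt (fun s => Derive phi (q * s) * g s) 0 B) r0 r
        - slope (fun q => RInt (fun s => Derive phi (q * s) * g s) 0 B) r0 r') <= M.
Proof.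
  intros Hr0 Hr Hr' Hne Hne' HB HM; destruct Hg as [Hgb Hgd].
  set (f := fun s => slope (fun q => Derive phi (q * s)) r0 r - slope (fun q => Derive phi (q * s)) r0 r').
  (* [g 0] is unconstrained; the weight [h] replaces it by the bound [1]. *)
  set (h := fun s => if Rle_dec s 0 then 1 else g s).
  assert (Hf : forall x, 0 <= x -> is_RInt f 0 x (slope (fun c => phi (c * x) / c) r0 r
                                                  - slope (fun c => phi (c * x) / c) r0 r')).
  { intros x Hx; apply (is_RInt_slope_diff (fun q s => Derive phi (q * s)) (fun q => phi (q * x) / q));
      try apply is_RInt_Derive_scaled; assumption. }
  assert (Hfh : is_RInt (fun s => f s * h s) 0 B
                  (slope (fun q => RInt (fun s => Derive phi (q * s) * g s) 0 B) r0 r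
                   - slope (fun q => RInt (fun s => Derive phi (q * s) * g s) 0 B) r0 r')).
  { refine (is_RInt_ext _ _ 0 B _ _
              (is_RInt_slope_diff (fun q s => Derive phi (q * s) * g s)
                 (fun q => RInt (fun s => Derive phi (q * s) * g s) 0 B) 0 B r0 r r' Hne Hne' _ _ _)).
    - intros s Hs; rewrite Rmin_left, Rmax_right in Hs by lra.
      unfold f, h, slope; destruct (Rle_dec s 0); [lra | simpl; field; lra].
    - apply (RInt_correct (V := R_CompleteNormedModule)), ex_RInt_kernel; lra.
    - apply (RInt_correct (V := R_CompleteNormedModule)), ex_RInt_kernel; lra.
    - apply (RInt_correct (V := R_CompleteNormedModule)), ex_RInt_kernel; lra. }
  rewrite <- (is_RInt_unique _ _ _ _ Hfh).
  replace M with (M * h 0) by (unfold h; destruct (Rle_dec 0 0); [ring | lra]).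
  apply (abel_inequality f h 0 B (/ Rabs (r - r0) + / Rabs (r' - r0)) M); try lra.
  - intros x y Hx Hxy Hy; unfold h.
    destruct (Rle_dec y 0), (Rle_dec x 0); try lra; [apply Hgb | apply Hgd]; lra.
  - intros x Hx; unfold h; destruct (Rle_dec x 0); [lra | apply Hgb; lra].
  - eexists; apply Hf; lra.
  - eexists; exact Hfh.
  - intros x Hx; unfold f.
    unfold Rminus at 1; apply Rle_trans with (1 := Rabs_triang _ _); rewrite Rabs_Ropp.
    apply Rplus_le_compat; apply Derive_scaled_slope_bound; lra.
  - intros x Hx; rewrite (is_RInt_unique _ _ _ _ (Hf x ltac:(lra))); apply HM; lra.
Qed.

(* The difference quotients of [kernel_integral] are Cauchy: by Abel's
   inequality for the weight [g] it suffices to bound the integrals over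
   [0, x], which are difference quotients of [c |-> phi (c x) / c]. *)
Lemma kernel_integral_derivable r0 : 0 < r0 -> ex_derive (kernel_integral phi g) r0.
Proof.
  intros Hr0; apply ex_derive_of_slope_cauchy; intros eps Heps.
  destruct (scaled_section_slope_cauchy phi Hphi Hd r0 (eps / 2) Hr0 ltac:(lra)) as [del [Hdel HE]].
  exists del; split; [lra |]; intros r r' Hr Hr'.
  assert (Hne : r <> r0) by (intros ->; rewrite Rminus_diag, Rabs_R0 in Hr; lra).
  assert (Hne' : r' <> r0) by (intros ->; rewrite Rminus_diag, Rabs_R0 in Hr'; lra).
  assert (Hrp : 0 < r) by (destruct Hr as [_ Hr]; apply Rabs_def2 in Hr; lra).
  assert (Hrp' : 0 < r') by (destruct Hr' as [_ Hr']; apply Rabs_def2 in Hr'; lra).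
  apply (Rabs_le_of_filterlim (Rbar_locally p_infty)
           (fun B => slope (fun q => RInt (fun s => Derive phi (q * s) * g s) 0 B) r0 r
                     - slope (fun q => RInt (fun s => Derive phi (q * s) * g s) 0 B) r0 r')).
  - apply (filterlim_slope_diff (Rbar_locally p_infty)
             (fun B q => RInt (fun s => Derive phi (q * s) * g s) 0 B) (kernel_integral phi g));
      try assumption; apply kernel_integral_cvg; assumption.
  - exists 0; intros B HB; apply Rle_trans with (eps / 2); [| lra].
    apply kernel_truncated_slope_cauchy; try assumption.
    intros x Hx; apply HE; assumption.
Qed.

End KernelIntegral.

(** * Tail dependence functions and the Markov product *)

Section TailDependence.

Variables C L : R -> R -> R.
Hypothesis HC : is_copula2 C.
Hypothesis HL : is_tdf_of C L.

Lemma tdf_zero_l a : 0 <= a -> L a 0 = 0.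
Proof.
  intros Ha; destruct HC as [_ [HC0 _]].
  assert (Hv : forall s, 0 < s -> s * a <= 1 -> C (s * a) (s * 0) / s = 0).
  { intros s Hs Hsa; rewrite Rmult_0_r, (proj1 (HC0 (s * a) ltac:(split; nra))); unfold Rdiv; ring. }
  apply Rle_antisym.
  - apply (limit_le_of_eventually _ _ 0 a Ha (HL a 0 Ha (Rle_refl 0))); intros s Hs Hsa.
    rewrite Hv; lra.
  - apply (limit_ge_of_eventually _ _ 0 a Ha (HL a 0 Ha (Rle_refl 0))); intros s Hs Hsa.
    rewrite Hv; lra.
Qed.

Lemma tdf_zero_r b : 0 <= b -> L 0 b = 0.
Proof.
  intros Hb; destruct HC as [_ [HC0 _]].
  assert (Hv : forall s, 0 < s -> s * b <= 1 -> C (s * 0) (s * b) / s = 0).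
  { intros s Hs Hsb; rewrite Rmult_0_r, (proj2 (HC0 (s * b) ltac:(split; nra))); unfold Rdiv; ring. }
  apply Rle_antisym.
  - apply (limit_le_of_eventually _ _ 0 b Hb (HL 0 b (Rle_refl 0) Hb)); intros s Hs Hsb.
    rewrite Hv; lra.
  - apply (limit_ge_of_eventually _ _ 0 b Hb (HL 0 b (Rle_refl 0) Hb)); intros s Hs Hsb.
    rewrite Hv; lra.
Qed.

Lemma tdf_2_increasing a1 a2 b1 b2 : 0 <= a1 -> a1 <= a2 -> 0 <= b1 -> b1 <= b2 ->
  0 <= L a2 b2 - L a2 b1 - L a1 b2 + L a1 b1.
Proof.
  intros Ha1 Ha12 Hb1 Hb12; destruct HC as [_ [_ [_ HC2]]].
  replace (L a2 b2 - L a2 b1 - L a1 b2 + L a1 b1)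
    with (((L a2 b2 + -1 * L a2 b1) + -1 * L a1 b2) + 1 * L a1 b1) by ring.
  apply (limit_ge_of_eventually _ _ 0 (a2 + b2) ltac:(lra)
           (filterlim_plus_scal (at_right 0) _ _ _ _ _
              (filterlim_plus_scal (at_right 0) _ _ _ _ _
                 (filterlim_plus_scal (at_right 0) _ _ _ _ _
                    (HL a2 b2 ltac:(lra) ltac:(lra)) (HL a2 b1 ltac:(lra) Hb1))
                 (HL a1 b2 Ha1 ltac:(lra)))
              (HL a1 b1 Ha1 Hb1))).
  intros s Hs Hsw.
  assert (H := HC2 (s * a1) (s * a2) (s * b1) (s * b2)
                 ltac:(nra) ltac:(nra) ltac:(nra) ltac:(nra) ltac:(nra) ltac:(nra)).
  apply Rmult_le_reg_r with s; [exact Hs |].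
  replace ((C (s * a2) (s * b2) / s + -1 * (C (s * a2) (s * b1) / s) + -1 * (C (s * a1) (s * b2) / s)
            + 1 * (C (s * a1) (s * b1) / s)) * s)
    with (C (s * a2) (s * b2) - C (s * a2) (s * b1) - C (s * a1) (s * b2) + C (s * a1) (s * b1))
    by (field; lra).
  lra.
Qed.

Lemma tdf_lipschitz_r a b1 b2 : 0 <= a -> 0 <= b1 -> b1 <= b2 -> L a b2 - L a b1 <= b2 - b1.
Proof.
  intros Ha Hb1 Hb12; destruct HC as [_ [_ [HC1 HC2]]].
  replace (L a b2 - L a b1) with (L a b2 + -1 * L a b1) by ring.
  apply (limit_le_of_eventually _ _ _ (a + b2) ltac:(lra)
           (filterlim_plus_scal (at_right 0) _ _ _ _ _ (HL a b2 Ha ltac:(lra)) (HL a b1 Ha Hb1))).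
  intros s Hs Hsw.
  assert (H := HC2 (s * a) 1 (s * b1) (s * b2)
                 ltac:(nra) ltac:(nra) ltac:(lra) ltac:(nra) ltac:(nra) ltac:(nra)).
  rewrite (proj2 (HC1 (s * b2) ltac:(split; nra))), (proj2 (HC1 (s * b1) ltac:(split; nra))) in H.
  apply Rmult_le_reg_r with s; [exact Hs |].
  replace ((C (s * a) (s * b2) / s + -1 * (C (s * a) (s * b1) / s)) * s)
    with (C (s * a) (s * b2) - C (s * a) (s * b1)) by (field; lra).
  nra.
Qed.

Lemma tdf_lipschitz_l a1 a2 b : 0 <= a1 -> a1 <= a2 -> 0 <= b -> L a2 b - L a1 b <= a2 - a1.
Proof.
  intros Ha1 Ha12 Hb; destruct HC as [_ [_ [HC1 HC2]]].
  replace (L a2 b - L a1 b) with (L a2 b + -1 * L a1 b) by ring.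
  apply (limit_le_of_eventually _ _ _ (a2 + b) ltac:(lra)
           (filterlim_plus_scal (at_right 0) _ _ _ _ _ (HL a2 b ltac:(lra) Hb) (HL a1 b Ha1 Hb))).
  intros s Hs Hsw.
  assert (H := HC2 (s * a1) (s * a2) (s * b) 1
                 ltac:(nra) ltac:(nra) ltac:(nra) ltac:(nra) ltac:(nra) ltac:(lra)).
  rewrite (proj1 (HC1 (s * a2) ltac:(split; nra))), (proj1 (HC1 (s * a1) ltac:(split; nra))) in H.
  apply Rmult_le_reg_r with s; [exact Hs |].
  replace ((C (s * a2) (s * b) / s + -1 * (C (s * a1) (s * b) / s)) * s)
    with (C (s * a2) (s * b) - C (s * a1) (s * b)) by (field; lra).
  nra.
Qed.

Lemma tdf_homogeneous c a b : 0 < c -> 0 <= a -> 0 <= b -> L (c * a) (c * b) = c * L a b.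
Proof.
  intros Hc Ha Hb.
  assert (Hca : 0 <= c * a) by (apply Rmult_le_pos; lra).
  assert (Hcb : 0 <= c * b) by (apply Rmult_le_pos; lra).
  apply (filterlim_locally_unique _ _ _ (HL (c * a) (c * b) Hca Hcb)).
  assert (Hscaled := filterlim_plus_scal (at_right 0) (fun _ => 0) _ 0 _ c (filterlim_const 0)
                       (filterlim_comp _ _ _ _ _ _ _ _ (filterlim_at_right_scale c Hc) (HL a b Ha Hb))).
  rewrite Rplus_0_l in Hscaled.
  apply (filterlim_ext_loc (fun s => 0 + c * (C (s * c * a) (s * c * b) / (s * c)))); [| exact Hscaled].
  apply (filter_imp (fun s => 0 < s /\ s * 0 <= 1)); [| apply at_right_0_scaled_le_1; lra].
  intros s [Hs _].
  replace (s * (c * a)) with (s * c * a) by ring; replace (s * (c * b)) with (s * c * b) by ring.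
  field; lra.
Qed.

End TailDependence.

Lemma M2_homogeneous L : in_M2 L ->
  forall c a b, 0 < c -> 0 <= a -> 0 <= b -> L (c * a) (c * b) = c * L a b.
Proof. intros [C [_ HL]]; exact (tdf_homogeneous C L HL). Qed.

Lemma M2_section L : in_M2 L -> tdf_section (fun y => L 1 y).
Proof.
  intros HM; pose proof HM as [C [HC HL]]; split.
  - apply (tdf_zero_l C L HC HL); lra.
  - intros y z Hyz; split.
    + pose proof (tdf_2_increasing C L HC HL 0 1 y z ltac:(lra) ltac:(lra) ltac:(lra) ltac:(lra)).
      rewrite !(tdf_zero_r C L HC HL) in * by lra; lra.
    + apply (tdf_lipschitz_r C L HC HL); lra.
  - intros y Hy; pose proof (tdf_lipschitz_l C L HC HL 0 1 y ltac:(lra) ltac:(lra) Hy).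
    rewrite (tdf_zero_r C L HC HL) in * by lra; lra.
  - intros l y z Hl Hyz.
    pose proof (tdf_2_increasing C L HC HL l 1 (l * y) (l * z)
                  ltac:(lra) ltac:(lra) ltac:(nra) ltac:(nra)).
    assert (Hscale : forall v, 0 <= v -> L l (l * v) = l * L 1 v).
    { intros v Hv; rewrite <- (M2_homogeneous L HM l 1 v) by lra; rewrite Rmult_1_r; reflexivity. }
    rewrite !Hscale in H by lra; lra.
Qed.

Lemma M2_transpose L : in_M2 L -> in_M2 (fun a b => L b a).
Proof.
  intros [C [[Cb [C0 [C1 C2]]] HL]]; exists (fun u v => C v u); split.
  - split; [| split; [| split]].
    + intros u v Hu Hv; apply Cb; assumption.
    + intros u Hu; destruct (C0 u Hu); split; assumption.
    + intros u Hu; destruct (C1 u Hu); split; assumption.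
    + intros u1 u2 v1 v2 H1 H2 H3 H4 H5 H6; specialize (C2 v1 v2 u1 u2 H4 H5 H6 H1 H2 H3); lra.
  - intros w1 w2 Hw1 Hw2; exact (HL w2 w1 Hw2 Hw1).
Qed.

Lemma M2_Derive_r L w t : in_M2 L -> 0 < w -> 0 < t ->
  Derive (fun s => L w s) t = Derive (fun y => L 1 y) (t / w).
Proof.
  intros HM Hw Ht.
  assert (Htw : 0 < t / w) by (apply Rdiv_lt_0_compat; assumption).
  apply Derive_right.
  assert (Hlim := filterlim_comp _ _ _ _ _ _ _ _
                    (filterlim_at_right_scale (/ w) ltac:(apply Rinv_0_lt_compat; lra))
                    (proj1 (section_right_derivative _ (M2_section L HM) (t / w) Htw))).
  apply (filterlim_ext_loc (fun h => slope (fun y => L 1 y) (t / w) (t / w + h * / w))); [| exact Hlim].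
  apply (filter_imp (fun h => 0 < h /\ h * 0 <= 1)); [| apply at_right_0_scaled_le_1; lra].
  intros h [Hh _]; unfold slope.
  assert (Hsc : forall v, 0 <= v -> L w v = w * L 1 (v / w)).
  { intros v Hv; rewrite <- (M2_homogeneous L HM) by (try apply Rdiv_le_0_compat; lra).
    f_equal; field; lra. }
  rewrite (Hsc (t + h)), (Hsc t) by lra.
  replace (t / w + h * / w) with ((t + h) / w) by (field; lra).
  field; split; lra.
Qed.

Lemma M2_derivable_section L : in_M2 L -> hat_differentiable L -> derivable_pos (fun y => L 1 y).
Proof.
  intros HM Hd y Hy.
  apply (ex_derive_ext_loc (fun y => (1 + y) * hat L (1 / (1 + y)))).
  - exists (mkposreal y Hy); intros z Hz; change (Rabs (z - y) < y) in Hz; apply Rabs_def2 in Hz.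
    assert (Hs : 0 <= 1 / (1 + z) <= 1).
    { split; [apply Rdiv_le_0_compat; lra |].
      apply Rmult_le_reg_r with (1 + z); [lra |]; unfold Rdiv; rewrite Rmult_1_l, Rinv_l; lra. }
    unfold hat; rewrite <- (M2_homogeneous L HM) by lra.
    f_equal; field; lra.
  - auto_derive; split; [| lra].
    apply Hd; split; [apply Rdiv_lt_0_compat; lra |].
    apply Rmult_lt_reg_r with (1 + y); [lra |].
    unfold Rdiv; rewrite Rmult_1_l, Rinv_l by lra; lra.
Qed.

Lemma M2_bounded_nonincreasing_Derive L : in_M2 L -> bounded_nonincreasing (Derive (fun y => L 1 y)).
Proof.
  intros HM; split.
  - exact (section_Derive_bounds _ (M2_section L HM)).
  - exact (section_Derive_nonincreasing _ (M2_section L HM)).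
Qed.

(* The substitution [x = (1 - t) s] in the Markov product, after rewriting both
   partial derivatives with [M2_Derive_r]. *)
Lemma markov_prod_hat L1 L2 t : in_M2 L1 -> in_M2 L2 -> derivable_pos (fun y => L1 1 y) -> 0 < t < 1 ->
  markov_prod L1 L2 t (1 - t)
  = (1 - t) * kernel_integral (fun y => L1 1 y) (Derive (fun y => L2 y 1)) ((1 - t) / t).
Proof.
  intros HM1 HM2 Hd Ht.
  set (r := (1 - t) / t); assert (Hr : 0 < r) by (apply Rdiv_lt_0_compat; lra).
  assert (Hphi := M2_section L1 HM1).
  assert (Hg := M2_bounded_nonincreasing_Derive _ (M2_transpose L2 HM2)); cbv beta in Hg.
  apply (RInt_gen_0_p_infty_scale
           (fun s => Derive (fun y => L1 1 y) (r * s) * Derive (fun y => L2 y 1) s)).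
  - lra.
  - intros x Hx; rewrite (M2_Derive_r L1 t x HM1) by lra.
    rewrite (M2_Derive_r (fun a b => L2 b a) (1 - t) x (M2_transpose L2 HM2)) by lra.
    f_equal; f_equal; unfold r; field; lra.
  - intros B HB; apply ex_RInt_kernel; try assumption; lra.
  - apply kernel_integral_cvg; assumption.
Qed.

Lemma hat_markov_prod_differentiable_l L1 L2 : in_M2 L1 -> in_M2 L2 -> hat_differentiable L1 ->
  hat_differentiable (markov_prod L1 L2).
Proof.
  intros HM1 HM2 Hd1 t Ht.
  assert (Hd := M2_derivable_section L1 HM1 Hd1).
  apply (ex_derive_ext_loc (fun s => (1 - s) * kernel_integral (fun y => L1 1 y)
                                               (Derive (fun y => L2 y 1)) ((1 - s) / s))).
  - assert (Hm : 0 < Rmin t (1 - t)) by (apply Rmin_pos; lra).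
    exists (mkposreal _ Hm); intros z Hz; change (Rabs (z - t) < Rmin t (1 - t)) in Hz.
    apply Rabs_def2 in Hz; pose proof (Rmin_l t (1 - t)); pose proof (Rmin_r t (1 - t)).
    unfold hat; symmetry; apply markov_prod_hat; try assumption; lra.
  - auto_derive; split; [| lra].
    apply (kernel_integral_derivable _ _ (M2_section L1 HM1)
             (M2_bounded_nonincreasing_Derive _ (M2_transpose L2 HM2)) Hd).
    apply Rdiv_lt_0_compat; lra.
Qed.

Lemma hat_differentiable_transpose L L' : (forall a b, L' a b = L b a) ->
  hat_differentiable L -> hat_differentiable L'.
Proof.
  intros HL' Hd t Ht.
  apply (ex_derive_ext (fun s => hat L (1 - s))).
  - intros s; unfold hat; rewrite HL'; f_equal; ring.
  - auto_derive; apply Hd; lra.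
Qed.

Lemma markov_prod_transpose L1 L2 w1 w2 :
  markov_prod L1 L2 w1 w2 = markov_prod (fun a b => L2 b a) (fun a b => L1 b a) w2 w1.
Proof.
  unfold markov_prod; f_equal; apply functional_extensionality; intros x; ring.
Qed.

Theorem mainTheorem8 (L1 L2 : R -> R -> R) :
  in_M2 L1 -> in_M2 L2 ->
  (hat_differentiable L1 \/ hat_differentiable L2) ->
  hat_differentiable (markov_prod L1 L2).
Proof.
  intros HM1 HM2 [Hd1 | Hd2].
  - exact (hat_markov_prod_differentiable_l L1 L2 HM1 HM2 Hd1).
  - apply (hat_differentiable_transpose (markov_prod (fun a b => L2 b a) (fun a b => L1 b a))).
    + intros a b; apply markov_prod_transpose.
    + apply hat_markov_prod_differentiable_l; try apply M2_transpose; try assumption.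
      exact (hat_differentiable_transpose L2 _ (fun a b => eq_refl) Hd2).
Qed.
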